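(* Let $k\ge 3$ be an integer and let $\Omega\subset\mathbb{R}^4$ be a domain with smooth boundary and outer unit normal $\nu$. The boundary value problem for $\mathbb{C}^{2k}$-valued $u$: $\square_1^{(k)}u=f$ on $\Omega$, $D_0^{(k)*}(\nu)u|_{\partial\Omega}=0$, $D_1^{(k)*}(\nu)D_1^{(k)}u|_{\partial\Omega}=0$, is regular (satisfies the Shapiro–Lopatinskii condition).
   Context: Coordinates $x=(x_0,\dots,x_3)$; $\partial_{z_0}=\partial_{x_0}-i\partial_{x_1}$, $\partial_{\bar z_0}=\partial_{x_0}+i\partial_{x_1}$, $\partial_{z_1}=\partial_{x_2}-i\partial_{x_3}$, $\partial_{\bar z_1}=\partial_{x_2}+i\partial_{x_3}$. $D_0^{(k)}(\phi_0,\dots,\phi_k)=(\psi_0,\dots,\psi_{2k-1})$ with $\psi_{2j}=-\partial_{\bar z_1}\phi_j-\partial_{\bar z_0}\phi_{j+1}$, $\psi_{2j+1}=\partial_{z_0}\phi_j-\partial_{z_1}\phi_{j+1}$ ($0\le j\le k-1$); $(D_1^{(k)}\psi)_j=-\partial_{z_0}\psi_{2j}-\partial_{\bar z_1}\psi_{2j+1}+\partial_{z_1}\psi_{2j+2}-\partial_{\bar z_0}\psi_{2j+3}$ ($0\le j\le k-2$). For $D=\sum_jA_j\partial_{x_j}$ with constant matrices, $D^*=-\sum_j\overline{A_j}^{\,t}\partial_{x_j}$ and $D(\nu)=\sum_jA_j\nu_j$. $\square_1^{(k)}=D_0^{(k)}D_0^{(k)*}+D_1^{(k)*}D_1^{(k)}$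 (an elliptic second-order operator). Regularity (Shapiro–Lopatinskii): for each $x\in\partial\Omega$ and nonzero $\xi\in\mathbb{R}^4$ with $\xi\perp\nu_x$, the only bounded solution $u\in C^\infty([0,\infty),\mathbb{C}^{2k})$ of $\square_1^{(k)}(i\xi+n\partial_t)u(t)=0$ with $D_0^{(k)*}(n)u(0)=0$ and $D_1^{(k)*}(n)D_1^{(k)}(i\xi+n\partial_t)u(0)=0$ is $u=0$, where $n$ is the inner unit normal at $x$ and $Q(i\xi+n\partial_t)$ means replacing each $\partial_{x_l}$ by $i\xi_l+n_l\partial_t$. *)

From Stdlib Require Import Reals.
From Coquelicot Require Import Coquelicot.
Open Scope R_scope.

(* A minimal "C-module" structure, used to evaluate the constant-coefficient
   operators either on constant vectors (S = C) or on functions of t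
   (S = R -> C). *)
Record CMod (S : Type) := {
  zeroS : S;
  addS : S -> S -> S;
  smulS : C -> S -> S }.
Arguments zeroS {S} _.
Arguments addS {S} _ _ _.
Arguments smulS {S} _ _ _.

Section Ops.
Variable S : Type.
Variable M : CMod S.
Definition negS (w : S) : S := smulS M (RtoC (-1)) w.
Definition subS (a b : S) : S := addS M a (negS b).
Fixpoint sumS (n : nat) (f : nat -> S) : S :=
  match n with O => zeroS M | Datatypes.S n' => addS M (sumS n' f) (f n') end.

(* d l plays the role of the partial derivative d/dx_l, l = 0..3 *)
Variable d : nat -> S -> S.
Definition dz0  (w : S) : S := subS (d 0 w) (smulS M Ci (d 1 w)).
Definition dzb0 (w : S) : S := addS M (d 0 w) (smulS M Ci (d 1 w)).
Definition dz1  (w : S) : S := subS (d 2 w) (smulS M Ci (d 3 w)).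
Definition dzb1 (w : S) : S := addS M (d 2 w) (smulS M Ci (d 3 w)).

(* D_0^{(k)} : (phi_0..phi_k) |-> (psi_0..psi_{2k-1}); component m = 2j or 2j+1 *)
Definition D0 (phi : nat -> S) (m : nat) : S :=
  let j := Nat.div2 m in
  if Nat.odd m then subS (dz0 (phi j)) (dz1 (phi (j + 1)%nat))
  else subS (negS (dzb1 (phi j))) (dzb0 (phi (j + 1)%nat)).

(* D_1^{(k)} : (psi_0..psi_{2k-1}) |-> components j = 0..k-2 *)
Definition D1 (psi : nat -> S) (j : nat) : S :=
  addS M (subS (subS (negS (dz0 (psi (2 * j)%nat))) (dzb1 (psi (2 * j + 1)%nat)))
               (negS (dz1 (psi (2 * j + 2)%nat))))
         (negS (dzb0 (psi (2 * j + 3)%nat))).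
End Ops.

Definition CM : CMod C := {| zeroS := RtoC 0; addS := Cplus; smulS := Cmult |}.
Definition FM : CMod (R -> C) :=
  {| zeroS := fun _ => RtoC 0; addS := fun f g t => Cplus (f t) (g t);
     smulS := fun a f t => Cmult a (f t) |}.

(* "d/dx_l" := unit selector: used to read off the coefficient matrices A_l *)
Definition dsel (l : nat) : nat -> C -> C :=
  fun l' w => if Nat.eqb l' l then w else RtoC 0.
Definition evec (c : nat) : nat -> C :=
  fun j => if Nat.eqb j c then RtoC 1 else RtoC 0.

(* coefficient matrices: D_0 = sum_l A0_l d/dx_l, (A0_l)_{r c}; likewise D_1 *)
Definition A0 (l r c : nat) : C := D0 C CM (dsel l) (evec c) r.
Definition A1 (l r c : nat) : C := D1 C CM (dsel l) (evec c) r.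

Definition D0star {S} (M : CMod S) (k : nat) (d : nat -> S -> S) (psi : nat -> S)
  (c : nat) : S :=
  negS S M (sumS S M 4 (fun l => sumS S M (2 * k) (fun r =>
     smulS M (Cconj (A0 l r c)) (d l (psi r))))).
Definition D1star {S} (M : CMod S) (k : nat) (d : nat -> S -> S) (phi : nat -> S)
  (c : nat) : S :=
  negS S M (sumS S M 4 (fun l => sumS S M (k - 1) (fun r =>
     smulS M (Cconj (A1 l r c)) (d l (phi r))))).

Definition box1 {S} (M : CMod S) (k : nat) (d : nat -> S -> S) (u : nat -> S)
  (m : nat) : S :=
  addS M (D0 S M d (D0star M k d u) m) (D1star M k d (D1 S M d u) m).

Definition Cderive (w : R -> C) (t : R) : C :=
  (Derive (fun s => fst (w s)) t, Derive (fun s => snd (w s)) t).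

(* symbol substitution d/dx_l |-> i xi_l + n_l d/dt, acting on functions of t *)
Definition dtan (n xi : nat -> R) : nat -> (R -> C) -> (R -> C) :=
  fun l w t => Cplus (Cmult (Cmult Ci (RtoC (xi l))) (w t))
                     (Cmult (RtoC (n l)) (Cderive w t)).
(* substitution d/dx_l |-> n_l, giving the principal symbol D(n) *)
Definition dnu (n : nat -> R) : nat -> C -> C :=
  fun l w => Cmult (RtoC (n l)) w.

Definition smoothC (w : R -> C) : Prop :=
  forall (p : nat) (t : R),
    ex_derive_n (fun s => fst (w s)) p t /\ ex_derive_n (fun s => snd (w s)) p t.

Definition dot4 (a b : nat -> R) : R := a 0%nat * b 0%nat + a 1%nat * b 1%nat
  + a 2%nat * b 2%nat + a 3%nat * b 3%nat.

(* Shapiro-Lopatinskii condition at a boundary point with inner unit normal n,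
   for the tangential covector xi *)
Definition SL_condition (k : nat) (n xi : nat -> R) : Prop :=
  forall u : nat -> R -> C,
    (forall m, (m < 2 * k)%nat -> smoothC (u m)) ->
    (exists B : R, forall m t, (m < 2 * k)%nat -> 0 <= t -> Cmod (u m t) <= B) ->
    (forall m t, (m < 2 * k)%nat -> 0 <= t -> box1 FM k (dtan n xi) u m t = RtoC 0) ->
    (forall c, (c <= k)%nat -> D0star CM k (dnu n) (fun m => u m 0) c = RtoC 0) ->
    (forall c, (c < 2 * k)%nat ->
       D1star CM k (dnu n) (fun j => D1 (R -> C) FM (dtan n xi) u j 0) c = RtoC 0) ->
    forall m t, (m < 2 * k)%nat -> 0 <= t -> u m t = RtoC 0.

(* Taking jets in the normal variable [t] turns the tangential operators into
   constant-coefficient operators on sequences, and [box1] can be computed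
   component by component.  On the interior components [2 <= m <= 2k-3] it is
   [-2 (d^2/dt^2 - |xi|^2)], so a bounded solution is [u_m(0) e^{-|xi| t}].  Each of
   the two end pairs [(u_0, u_1)] and [(u_{2k-2}, u_{2k-1})] is coupled only
   through one combination [s] which solves the same equation, and this forces
   [u = (a + b t) e^{-|xi| t}] on the pair.  The boundary conditions then become
   linear relations between the values [u_m(0)]; in rotated coordinates [x_j] they
   form a three-term recurrence whose coefficients, controlled by Lagrange's identity
   for [n /\ xi], make [|x_j|] nondecreasing and the last [x_j] zero, so all
   boundary values, and then [u], vanish. *)

From Pilot Require Import Defs.
From Stdlib Require Import Reals Lra Lia FunctionalExtensionality.
From Coquelicot Require Import Coquelicot.
Open Scope R_scope.

Definition smooth (f : R -> R) : Prop := forall p t, ex_derive_n f p t.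

Lemma smooth_near (f : R -> R) (n : nat) (x : R) : smooth f ->
  locally x (fun y : R_UniformSpace => forall k, (k <= n)%nat -> ex_derive_n f k y).
Proof. intros H. apply filter_forall. intros y kk _. apply H. Qed.

Lemma smooth_ex_derive f t : smooth f -> ex_derive f t.
Proof. intros H. exact (H 1%nat t). Qed.

Lemma smooth_ex_derive_Derive f t : smooth f -> ex_derive (Derive f) t.
Proof. intros H. exact (H 2%nat t). Qed.

Lemma smooth_plus f g : smooth f -> smooth g -> smooth (fun t => f t + g t).
Proof. intros Hf Hg p t. apply ex_derive_n_plus; apply smooth_near; auto. Qed.

Lemma smooth_minus f g : smooth f -> smooth g -> smooth (fun t => f t - g t).
Proof. intros Hf Hg p t. apply ex_derive_n_minus; apply smooth_near; auto. Qed.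

Lemma smooth_scal f a : smooth f -> smooth (fun t => a * f t).
Proof. intros Hf p t. apply ex_derive_n_scal_l; auto. Qed.

Lemma smooth_const a : smooth (fun _ => a).
Proof. intros p t. apply ex_derive_n_const. Qed.

Lemma Derive_n_Derive f p t : Derive_n (Derive f) p t = Derive_n f (S p) t.
Proof.
  change (Derive f) with (Derive_n f 1).
  rewrite Derive_n_comp. f_equal. lia.
Qed.

Lemma smooth_Derive f : smooth f -> smooth (Derive f).
Proof.
  intros Hf p t. destruct p as [|p]; [exact I|].
  apply ex_derive_ext with (f := Derive_n f (S p)).
  - intros s. now rewrite Derive_n_Derive.
  - exact (Hf (S (S p)) t).
Qed.

Lemma smoothC_iff w :
  smoothC w <-> smooth (fun s => fst (w s)) /\ smooth (fun s => snd (w s)).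
Proof.
  split.
  - intros H. split; intros p t; apply H.
  - intros [H1 H2] p t. split; auto.
Qed.

Lemma smoothC_add f g : smoothC f -> smoothC g -> smoothC (addS FM f g).
Proof.
  intros [F1 F2]%smoothC_iff [G1 G2]%smoothC_iff.
  apply smoothC_iff; simpl; split; apply smooth_plus; auto.
Qed.

Lemma smoothC_scal a f : smoothC f -> smoothC (smulS FM a f).
Proof.
  intros [F1 F2]%smoothC_iff. apply smoothC_iff; simpl; split.
  - apply smooth_minus; apply smooth_scal; auto.
  - apply smooth_plus; apply smooth_scal; auto.
Qed.

Lemma smoothC_zero : smoothC (zeroS FM).
Proof. apply smoothC_iff; simpl; split; apply smooth_const. Qed.

Lemma smoothC_neg f : smoothC f -> smoothC (negS _ FM f).
Proof. apply smoothC_scal. Qed.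

Lemma smoothC_sub f g : smoothC f -> smoothC g -> smoothC (subS _ FM f g).
Proof. intros; apply smoothC_add; auto; now apply smoothC_neg. Qed.

Lemma smoothC_sum N F :
  (forall r, (r < N)%nat -> smoothC (F r)) -> smoothC (sumS _ FM N F).
Proof.
  induction N; intros H; [apply smoothC_zero|].
  apply smoothC_add; auto.
Qed.

Lemma smoothC_Cderive w : smoothC w -> smoothC (Cderive w).
Proof.
  intros [F1 F2]%smoothC_iff.
  apply smoothC_iff; split; apply smooth_Derive; auto.
Qed.

Lemma dtan_eq n xi l w : dtan n xi l w =
  addS FM (smulS FM (Cmult Ci (RtoC (xi l))) w) (smulS FM (RtoC (n l)) (Cderive w)).
Proof. reflexivity. Qed.

Lemma smoothC_dtan n xi l w : smoothC w -> smoothC (dtan n xi l w).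
Proof.
  intros H. rewrite dtan_eq.
  apply smoothC_add; apply smoothC_scal; auto. now apply smoothC_Cderive.
Qed.

(* Jets turn [d/dt] into the shift [p -> S p], so the tangential operators [dtan]
   become the constant-coefficient operators [djet] on sequences. *)
Definition jet (w : R -> C) (t : R) : nat -> C :=
  fun p => (Derive_n (fun s => fst (w s)) p t, Derive_n (fun s => snd (w s)) p t).

Definition JM : CMod (nat -> C) :=
  {| zeroS := fun _ => RtoC 0; addS := fun f g p => Cplus (f p) (g p);
     smulS := fun a f p => Cmult a (f p) |}.

Definition djet (n xi : nat -> R) : nat -> (nat -> C) -> (nat -> C) :=
  fun l J p => Cplus (Cmult (Cmult Ci (RtoC (xi l))) (J p))
                     (Cmult (RtoC (n l)) (J (S p))).

Lemma jet_0 w t : jet w t 0%nat = w t.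
Proof. unfold jet. simpl. destruct (w t); reflexivity. Qed.

Lemma jet_add f g t : smoothC f -> smoothC g ->
  jet (addS FM f g) t = addS JM (jet f t) (jet g t).
Proof.
  intros [F1 F2]%smoothC_iff [G1 G2]%smoothC_iff.
  apply functional_extensionality; intros p. unfold jet; simpl.
  rewrite !Derive_n_plus by (apply smooth_near; auto). reflexivity.
Qed.

Lemma jet_scal a f t : smoothC f -> jet (smulS FM a f) t = smulS JM a (jet f t).
Proof.
  intros [F1 F2]%smoothC_iff.
  apply functional_extensionality; intros p. unfold jet; simpl.
  rewrite Derive_n_minus by (apply smooth_near; apply smooth_scal; auto).
  rewrite Derive_n_plus by (apply smooth_near; apply smooth_scal; auto).
  rewrite !Derive_n_scal_l. reflexivity.
Qed.

Lemma jet_zero t : jet (zeroS FM) t = zeroS JM.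
Proof.
  apply functional_extensionality; intros p. unfold jet; simpl.
  destruct p; [reflexivity|]. rewrite Derive_n_const. reflexivity.
Qed.

Lemma jet_neg f t : smoothC f -> jet (negS _ FM f) t = negS _ JM (jet f t).
Proof. apply jet_scal. Qed.

Lemma jet_sub f g t : smoothC f -> smoothC g ->
  jet (subS _ FM f g) t = subS _ JM (jet f t) (jet g t).
Proof. intros; unfold subS; rewrite jet_add, jet_neg; auto. now apply smoothC_neg. Qed.

Lemma jet_sum N F t : (forall r, (r < N)%nat -> smoothC (F r)) ->
  jet (sumS _ FM N F) t = sumS _ JM N (fun r => jet (F r) t).
Proof.
  induction N; intros H; [apply jet_zero|]. cbn [sumS].
  rewrite jet_add, IHN; auto. apply smoothC_sum; auto.
Qed.

Lemma jet_Cderive w t : jet (Cderive w) t = fun p => jet w t (S p).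
Proof.
  apply functional_extensionality; intros p. unfold jet, Cderive; simpl.
  rewrite !Derive_n_Derive. reflexivity.
Qed.

Lemma jet_dtan n xi l w t : smoothC w -> jet (dtan n xi l w) t = djet n xi l (jet w t).
Proof.
  intros H. rewrite dtan_eq, jet_add, !jet_scal, jet_Cderive; auto.
  - now apply smoothC_Cderive.
  - apply smoothC_scal; auto.
  - apply smoothC_scal, smoothC_Cderive; auto.
Qed.

Section JetOperators.
Variables (n xi : nat -> R) (t : R).
Let d := dtan n xi.
Let e := djet n xi.

Lemma jet_dz w : smoothC w ->
  (smoothC (dz0 _ FM d w) /\ jet (dz0 _ FM d w) t = dz0 _ JM e (jet w t)) /\
  (smoothC (dzb0 _ FM d w) /\ jet (dzb0 _ FM d w) t = dzb0 _ JM e (jet w t)) /\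
  (smoothC (dz1 _ FM d w) /\ jet (dz1 _ FM d w) t = dz1 _ JM e (jet w t)) /\
  (smoothC (dzb1 _ FM d w) /\ jet (dzb1 _ FM d w) t = dzb1 _ JM e (jet w t)).
Proof.
  intros H.
  assert (S0 : forall l, smoothC (d l w)) by (intros; now apply smoothC_dtan).
  assert (J0 : forall l, jet (d l w) t = e l (jet w t)) by (intros; now apply jet_dtan).
  assert (SM : forall l, smoothC (smulS FM Ci (d l w))) by (intros; apply smoothC_scal; auto).
  unfold dz0, dzb0, dz1, dzb1.
  split; [split|split; [split|split; [split|split]]].
  - apply smoothC_sub; auto.
  - rewrite jet_sub, jet_scal, !J0; auto.
  - apply smoothC_add; auto.
  - rewrite jet_add, jet_scal, !J0; auto.
  - apply smoothC_sub; auto.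
  - rewrite jet_sub, jet_scal, !J0; auto.
  - apply smoothC_add; auto.
  - rewrite jet_add, jet_scal, !J0; auto.
Qed.

Lemma jet_D0 phi m : (forall r, smoothC (phi r)) ->
  smoothC (D0 _ FM d phi m) /\
  jet (D0 _ FM d phi m) t = D0 _ JM e (fun r => jet (phi r) t) m.
Proof.
  intros H. unfold D0. destruct (Nat.odd m).
  - destruct (jet_dz _ (H (Nat.div2 m))) as [[A1 A2] _].
    destruct (jet_dz _ (H (Nat.div2 m + 1)%nat)) as [_ [_ [[B1 B2] _]]].
    split; [apply smoothC_sub; auto|]. rewrite jet_sub, A2, B2; auto.
  - destruct (jet_dz _ (H (Nat.div2 m))) as [_ [_ [_ [A1 A2]]]].
    destruct (jet_dz _ (H (Nat.div2 m + 1)%nat)) as [_ [[B1 B2] _]].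
    assert (N1 := smoothC_neg _ A1).
    split; [apply smoothC_sub; auto|]. rewrite jet_sub, jet_neg, A2, B2; auto.
Qed.

Lemma jet_D1 psi j : (forall r, smoothC (psi r)) ->
  smoothC (D1 _ FM d psi j) /\
  jet (D1 _ FM d psi j) t = D1 _ JM e (fun r => jet (psi r) t) j.
Proof.
  intros H. unfold D1.
  destruct (jet_dz _ (H (2 * j)%nat)) as [[A1 A2] _].
  destruct (jet_dz _ (H (2 * j + 1)%nat)) as [_ [_ [_ [B1 B2]]]].
  destruct (jet_dz _ (H (2 * j + 2)%nat)) as [_ [_ [[C1 C2] _]]].
  destruct (jet_dz _ (H (2 * j + 3)%nat)) as [_ [[D1' D2] _]].
  assert (N1 := smoothC_neg _ A1). assert (N2 := smoothC_neg _ C1).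
  assert (N3 := smoothC_neg _ D1').
  assert (M1 := smoothC_sub _ _ N1 B1). assert (M2 := smoothC_sub _ _ M1 N2).
  split; [apply smoothC_add; auto|].
  rewrite jet_add, !jet_sub, !jet_neg by auto. rewrite A2, B2, C2, D2. reflexivity.
Qed.

Lemma jet_D0star k u c : (forall r, smoothC (u r)) ->
  smoothC (D0star FM k d u c) /\
  jet (D0star FM k d u c) t = D0star JM k e (fun r => jet (u r) t) c.
Proof.
  intros H. unfold D0star.
  assert (Hs : forall l r, smoothC (smulS FM (Cconj (A0 l r c)) (d l (u r))))
    by (intros; apply smoothC_scal, smoothC_dtan; auto).
  assert (Hs' : forall l,
    smoothC (sumS _ FM (2 * k) (fun r => smulS FM (Cconj (A0 l r c)) (d l (u r)))))
    by (intros; apply smoothC_sum; auto).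
  split; [apply smoothC_neg, smoothC_sum; auto|].
  rewrite jet_neg, jet_sum by (auto; apply smoothC_sum; auto).
  do 2 f_equal. apply functional_extensionality; intros l.
  rewrite jet_sum by auto. f_equal. apply functional_extensionality; intros r.
  rewrite jet_scal by (apply smoothC_dtan; auto). unfold d, e. rewrite jet_dtan; auto.
Qed.

Lemma jet_D1star k phi c : (forall r, smoothC (phi r)) ->
  smoothC (D1star FM k d phi c) /\
  jet (D1star FM k d phi c) t = D1star JM k e (fun r => jet (phi r) t) c.
Proof.
  intros H. unfold D1star.
  assert (Hs : forall l r, smoothC (smulS FM (Cconj (Defs.A1 l r c)) (d l (phi r))))
    by (intros; apply smoothC_scal, smoothC_dtan; auto).
  assert (Hs' : forall l,
    smoothC (sumS _ FM (k - 1) (fun r => smulS FM (Cconj (Defs.A1 l r c)) (d l (phi r)))))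
    by (intros; apply smoothC_sum; auto).
  split; [apply smoothC_neg, smoothC_sum; auto|].
  rewrite jet_neg, jet_sum by (auto; apply smoothC_sum; auto).
  do 2 f_equal. apply functional_extensionality; intros l.
  rewrite jet_sum by auto. f_equal. apply functional_extensionality; intros r.
  rewrite jet_scal by (apply smoothC_dtan; auto). unfold d, e. rewrite jet_dtan; auto.
Qed.

Lemma jet_box1 k u m : (forall r, smoothC (u r)) ->
  jet (box1 FM k d u m) t = box1 JM k e (fun r => jet (u r) t) m.
Proof.
  intros H. unfold box1.
  assert (H1 : forall c, smoothC (D0star FM k d u c)) by (intros; apply jet_D0star; auto).
  assert (H2 : forall c, smoothC (D1 _ FM d u c)) by (intros; apply jet_D1; auto).
  destruct (jet_D0 (D0star FM k d u) m H1) as [A1 A2].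
  destruct (jet_D1star k (D1 _ FM d u) m H2) as [B1 B2].
  rewrite jet_add, A2, B2; auto. f_equal.
  - f_equal. apply functional_extensionality; intros c. apply jet_D0star; auto.
  - f_equal. apply functional_extensionality; intros c. apply jet_D1; auto.
Qed.
End JetOperators.

Ltac ceq := apply injective_projections; simpl; ring.

Ltac eqb_cases := repeat (match goal with |- context [Nat.eqb ?a ?b] =>
   destruct (Nat.eqb_spec a b) end); try (exfalso; lia).

Ltac ltb_cases := repeat (match goal with
  | |- context [Nat.ltb ?a ?b] => destruct (Nat.ltb_spec a b)
  | H : context [Nat.ltb ?a ?b] |- _ => destruct (Nat.ltb_spec a b)
  end); try (exfalso; lia).

Definition ifc (b : bool) (a : C) : C := if b then a else RtoC 0.

Definition dz0c l := dz0 C CM (dsel l) (RtoC 1).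
Definition dzb0c l := dzb0 C CM (dsel l) (RtoC 1).
Definition dz1c l := dz1 C CM (dsel l) (RtoC 1).
Definition dzb1c l := dzb1 C CM (dsel l) (RtoC 1).

Lemma nat_parity r : exists q,
  r = (2 * q)%nat /\ Nat.odd r = false /\ Nat.div2 r = q \/
  r = (2 * q + 1)%nat /\ Nat.odd r = true /\ Nat.div2 r = q.
Proof.
  exists (Nat.div2 r). pose proof (Nat.div2_odd r) as H.
  destruct (Nat.odd r); simpl in H; [right|left]; repeat split; lia.
Qed.

Lemma odd_double q : Nat.odd (2 * q) = false.
Proof. rewrite <- Nat.negb_even, Nat.even_mul. reflexivity. Qed.

Lemma odd_double_plus_1 q : Nat.odd (2 * q + 1) = true.
Proof. rewrite Nat.odd_add, odd_double. reflexivity. Qed.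

Lemma div2_double_plus_1 q : Nat.div2 (2 * q + 1) = q.
Proof. rewrite Nat.add_1_r. apply Nat.div2_succ_double. Qed.

Ltac A_entries := unfold Defs.A1, A0, D1, D0, ifc, dz0c, dz1c, dzb0c, dzb1c, evec;
  unfold dz0, dz1, dzb0, dzb1, subS, negS, dsel; cbv zeta.

Lemma A0_col0 l r :
  A0 l r 0 = Cplus (ifc (r =? 1) (dz0c l)) (ifc (r =? 0) (Copp (dzb1c l))).
Proof.
  destruct (nat_parity r) as [q [[E [O D]]|[E [O D]]]]; A_entries; rewrite O, D; subst r;
  eqb_cases; ceq.
Qed.

Lemma A0_colS l r c : A0 l r (S c) =
  Cplus (Cplus (ifc (r =? 2 * c + 3) (dz0c l)) (ifc (r =? 2 * c + 1) (Copp (dz1c l))))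
        (Cplus (ifc (r =? 2 * c + 2) (Copp (dzb1c l))) (ifc (r =? 2 * c) (Copp (dzb0c l)))).
Proof.
  destruct (nat_parity r) as [q [[E [O D]]|[E [O D]]]]; A_entries; rewrite O, D; subst r;
  eqb_cases; ceq.
Qed.

Lemma A1_col0 l r : Defs.A1 l r (2 * 0) = ifc (r =? 0) (Copp (dz0c l)).
Proof. A_entries. eqb_cases; ceq. Qed.

Lemma A1_col_even l r q : Defs.A1 l r (2 * S q) =
  Cplus (ifc (r =? S q) (Copp (dz0c l))) (ifc (r =? q) (dz1c l)).
Proof. A_entries. eqb_cases; ceq. Qed.

Lemma A1_col1 l r : Defs.A1 l r (2 * 0 + 1) = ifc (r =? 0) (Copp (dzb1c l)).
Proof. A_entries. eqb_cases; ceq. Qed.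

Lemma A1_col_odd l r q : Defs.A1 l r (2 * S q + 1) =
  Cplus (ifc (r =? S q) (Copp (dzb1c l))) (ifc (r =? q) (Copp (dzb0c l))).
Proof. A_entries. eqb_cases; ceq. Qed.

Lemma sumS_ext {S} (M : CMod S) N f g : (forall r, (r < N)%nat -> f r = g r) ->
  sumS S M N f = sumS S M N g.
Proof.
  induction N; intros H; [reflexivity|]. cbn [sumS].
  rewrite IHN, H by auto. reflexivity.
Qed.

Lemma sumS_JM N F p : sumS _ JM N F p = sumS _ CM N (fun r => F r p).
Proof. induction N; [reflexivity|]. cbn [sumS]. simpl. rewrite IHN. reflexivity. Qed.

Lemma sumS_Cplus N f g :
  sumS _ CM N (fun r => Cplus (f r) (g r)) = Cplus (sumS _ CM N f) (sumS _ CM N g).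
Proof.
  induction N; cbn [sumS]; simpl; [ceq|]. rewrite IHN.
  generalize (sumS C CM N f) (sumS C CM N g). intros. ceq.
Qed.

Lemma sumS_delta N r0 (Y : nat -> C) :
  sumS _ CM N (fun r => ifc (r =? r0) (Y r)) = ifc (r0 <? N) (Y r0).
Proof.
  induction N; cbn [sumS]; unfold ifc in *.
  - destruct (Nat.ltb_spec r0 0); [lia|reflexivity].
  - rewrite IHN. simpl.
    destruct (Nat.ltb_spec r0 N), (Nat.ltb_spec r0 (S N)), (Nat.eqb_spec N r0);
      try (exfalso; lia); subst; ceq.
Qed.

Lemma sumS_4 (f : nat -> C) :
  sumS _ CM 4 f = Cplus (Cplus (f 0%nat) (f 1%nat)) (Cplus (f 2%nat) (f 3%nat)).
Proof. simpl. generalize (f 0%nat) (f 1%nat) (f 2%nat) (f 3%nat). intros. ceq. Qed.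

Lemma Cconj_ifc_mult b a Y : Cmult (Cconj (ifc b a)) Y = ifc b (Cmult (Cconj a) Y).
Proof. destruct b; simpl; [reflexivity|ceq]. Qed.

Lemma sumS_conj_delta2 N (F : nat -> C) a b x y (Y : nat -> C) :
  (forall r, F r = Cplus (ifc (r =? a) x) (ifc (r =? b) y)) ->
  sumS _ CM N (fun r => Cmult (Cconj (F r)) (Y r)) =
   Cplus (ifc (a <? N) (Cmult (Cconj x) (Y a))) (ifc (b <? N) (Cmult (Cconj y) (Y b))).
Proof.
  intros H. rewrite <- (sumS_delta N a (fun r => Cmult (Cconj x) (Y r))).
  rewrite <- (sumS_delta N b (fun r => Cmult (Cconj y) (Y r))), <- sumS_Cplus.
  apply sumS_ext. intros r _.
  rewrite H, Cplus_conj, Cmult_plus_distr_r, !Cconj_ifc_mult.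
  unfold ifc. destruct (Nat.eqb_spec r a), (Nat.eqb_spec r b); subst; reflexivity.
Qed.

Lemma sumS_conj_delta1 N (F : nat -> C) a x (Y : nat -> C) :
  (forall r, F r = ifc (r =? a) x) ->
  sumS _ CM N (fun r => Cmult (Cconj (F r)) (Y r)) = ifc (a <? N) (Cmult (Cconj x) (Y a)).
Proof.
  intros H. rewrite (sumS_conj_delta2 N F a a x (RtoC 0) Y).
  - unfold ifc. destruct (a <? N); ceq.
  - intros r. rewrite H. unfold ifc. destruct (r =? a); ceq.
Qed.

Lemma sumS_conj_A0_colS N l c (Y : nat -> C) :
  sumS _ CM N (fun r => Cmult (Cconj (A0 l r (S c))) (Y r)) =
  Cplus (Cplus (ifc (2 * c + 3 <? N) (Cmult (Cconj (dz0c l)) (Y (2 * c + 3)%nat)))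
               (ifc (2 * c + 1 <? N) (Cmult (Cconj (Copp (dz1c l))) (Y (2 * c + 1)%nat))))
        (Cplus (ifc (2 * c + 2 <? N) (Cmult (Cconj (Copp (dzb1c l))) (Y (2 * c + 2)%nat)))
               (ifc (2 * c <? N) (Cmult (Cconj (Copp (dzb0c l))) (Y (2 * c)%nat)))).
Proof.
  rewrite (sumS_ext _ _ _ (fun r =>
    Cplus (Cplus (ifc (r =? 2 * c + 3) (Cmult (Cconj (dz0c l)) (Y r)))
                 (ifc (r =? 2 * c + 1) (Cmult (Cconj (Copp (dz1c l))) (Y r))))
          (Cplus (ifc (r =? 2 * c + 2) (Cmult (Cconj (Copp (dzb1c l))) (Y r)))
                 (ifc (r =? 2 * c) (Cmult (Cconj (Copp (dzb0c l))) (Y r)))))).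
  - rewrite !sumS_Cplus, !sumS_delta. reflexivity.
  - intros r _. rewrite A0_colS, !Cplus_conj, !Cmult_plus_distr_r, !Cconj_ifc_mult.
    reflexivity.
Qed.

Lemma negS_JM x p : negS _ JM x p = Copp (x p).
Proof. simpl. generalize (x p). intros. ceq. Qed.

Lemma D0star_JM k e J c p : D0star JM k e J c p =
  Copp (sumS _ CM 4 (fun l => sumS _ CM (2 * k)
          (fun r => Cmult (Cconj (A0 l r c)) (e l (J r) p)))).
Proof.
  unfold D0star. rewrite negS_JM, sumS_JM. f_equal.
  apply sumS_ext. intros l _. rewrite sumS_JM. reflexivity.
Qed.

Lemma D1star_JM k e J c p : D1star JM k e J c p =
  Copp (sumS _ CM 4 (fun l => sumS _ CM (k - 1)
          (fun r => Cmult (Cconj (Defs.A1 l r c)) (e l (J r) p)))).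
Proof.
  unfold D1star. rewrite negS_JM, sumS_JM. f_equal.
  apply sumS_ext. intros l _. rewrite sumS_JM. reflexivity.
Qed.

Ltac coef_cases := unfold dz0c, dz1c, dzb0c, dzb1c, ifc;
  unfold dz0, dz1, dzb0, dzb1, subS, negS; simpl dsel; ltb_cases; ceq.

Section AdjointComponents.
Variables (k : nat) (e : nat -> (nat -> C) -> nat -> C) (J : nat -> nat -> C) (p : nat).

Lemma D0star_JM_0 : (1 <= k)%nat -> D0star JM k e J 0 p =
  Cminus (dz1 _ JM e (J 0%nat) p) (dzb0 _ JM e (J 1%nat) p).
Proof.
  intros H. rewrite D0star_JM, sumS_4.
  rewrite !(sumS_conj_delta2 _ _ 1 0 _ _ _ (fun r => A0_col0 _ r)). coef_cases.
Qed.

Lemma D0star_JM_S c : (S c <= k)%nat -> D0star JM k e J (S c) p =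
  Cplus (ifc (S c <? k)
           (Cminus (dz1 _ JM e (J (2 * c + 2)%nat) p) (dzb0 _ JM e (J (2 * c + 3)%nat) p)))
        (Cplus (dz0 _ JM e (J (2 * c)%nat) p) (dzb1 _ JM e (J (2 * c + 1)%nat) p)).
Proof.
  intros H. rewrite D0star_JM, sumS_4, !sumS_conj_A0_colS. coef_cases.
Qed.

Lemma D1star_JM_0 : D1star JM k e J (2 * 0) p =
  ifc (0 <? k - 1) (dzb0 _ JM e (J 0%nat) p).
Proof. rewrite D1star_JM, sumS_4, !(sumS_conj_delta1 _ _ _ _ _ (A1_col0 _)). coef_cases. Qed.

Lemma D1star_JM_1 : D1star JM k e J (2 * 0 + 1) p =
  ifc (0 <? k - 1) (dz1 _ JM e (J 0%nat) p).
Proof. rewrite D1star_JM, sumS_4, !(sumS_conj_delta1 _ _ _ _ _ (A1_col1 _)). coef_cases. Qed.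

Lemma D1star_JM_even q : D1star JM k e J (2 * S q) p =
  Cminus (ifc (S q <? k - 1) (dzb0 _ JM e (J (S q)) p))
         (ifc (q <? k - 1) (dzb1 _ JM e (J q) p)).
Proof.
  rewrite D1star_JM, sumS_4.
  rewrite !(sumS_conj_delta2 _ _ _ _ _ _ _ (fun r => A1_col_even _ r q)). coef_cases.
Qed.

Lemma D1star_JM_odd q : D1star JM k e J (2 * S q + 1) p =
  Cplus (ifc (S q <? k - 1) (dz1 _ JM e (J (S q)) p))
        (ifc (q <? k - 1) (dz0 _ JM e (J q) p)).
Proof.
  rewrite D1star_JM, sumS_4.
  rewrite !(sumS_conj_delta2 _ _ _ _ _ _ _ (fun r => A1_col_odd _ r q)). coef_cases.
Qed.
End AdjointComponents.

Lemma RtoC_m1 : RtoC (-1) = Copp (RtoC 1).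
Proof. ceq. Qed.

Definition laplacian (e : nat -> (nat -> C) -> nat -> C) (W : nat -> C) : nat -> C :=
  fun p => Cplus (dz0 _ JM e (dzb0 _ JM e W) p) (dz1 _ JM e (dzb1 _ JM e W) p).

(* The combinations through which [box1] couples the first and the last pair of
   components ([box1_JM_0], ..., [box1_JM_last_odd]). *)
Definition edge_first (e : nat -> (nat -> C) -> nat -> C) (J0 J1 : nat -> C) : nat -> C :=
  fun p => Cplus (dz0 _ JM e J0 p) (dzb1 _ JM e J1 p).

Definition edge_last (e : nat -> (nat -> C) -> nat -> C) (J0 J1 : nat -> C) : nat -> C :=
  fun p => Cminus (dz1 _ JM e J0 p) (dzb0 _ JM e J1 p).

Ltac box_unfold := unfold box1, D0;
  rewrite ?odd_double, ?odd_double_plus_1, ?Nat.div2_double, ?div2_double_plus_1;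
  unfold dz0, dz1, dzb0, dzb1, subS, negS; cbn [addS smulS JM]; unfold djet.

Ltac box_expand := unfold ifc; ltb_cases;
  unfold laplacian, edge_first, edge_last, D1, dz0, dz1, dzb0, dzb1, subS, negS, djet;
  cbn [addS smulS JM]; rewrite ?RtoC_m1.

Section BoxComponents.
Variables (k : nat) (n xi : nat -> R) (J : nat -> nat -> C) (p : nat).
Local Notation e := (djet n xi).

Lemma box1_JM_interior_even j : (S j <= k - 2)%nat ->
  box1 JM k e J (2 * S j) p =
  (RtoC (-2) * laplacian e (J (2 * S j)%nat) p)%C.
Proof.
  intros H. box_unfold. replace (S j + 1)%nat with (S (S j)) by lia.
  rewrite D1star_JM_even, !D0star_JM_S by lia.
  replace (RtoC (-2)) with (Copp (RtoC 2)) by ceq. box_expand.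
  replace (2 * S j + 3)%nat with (2 * j + 5)%nat by lia.
  replace (2 * S j + 2)%nat with (2 * j + 4)%nat by lia.
  replace (2 * S j + 1)%nat with (2 * j + 3)%nat by lia.
  replace (2 * S j)%nat with (2 * j + 2)%nat by lia.
  ring.
Qed.

Lemma box1_JM_interior_odd j : (S j <= k - 2)%nat ->
  box1 JM k e J (2 * S j + 1) p =
  (RtoC (-2) * laplacian e (J (2 * S j + 1)%nat) p)%C.
Proof.
  intros H. box_unfold. replace (S j + 1)%nat with (S (S j)) by lia.
  rewrite D1star_JM_odd, !D0star_JM_S by lia.
  replace (RtoC (-2)) with (Copp (RtoC 2)) by ceq. box_expand.
  replace (2 * S j + 3)%nat with (2 * j + 5)%nat by lia.
  replace (2 * S j + 2)%nat with (2 * j + 4)%nat by lia.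
  replace (2 * S j + 1)%nat with (2 * j + 3)%nat by lia.
  replace (2 * S j)%nat with (2 * j + 2)%nat by lia.
  ring.
Qed.

Lemma box1_JM_0 : (3 <= k)%nat ->
  box1 JM k e J (2 * 0) p = Copp (Cplus (laplacian e (J 0%nat) p)
                                  (dzb0 _ JM e (edge_first e (J 0%nat) (J 1%nat)) p)).
Proof.
  intros H. box_unfold.
  rewrite D1star_JM_0. change (0 + 1)%nat with (S 0).
  rewrite !D0star_JM_S, !D0star_JM_0 by lia. box_expand.
  simpl Nat.mul; simpl Nat.add. ring.
Qed.

Lemma box1_JM_1 : (3 <= k)%nat ->
  box1 JM k e J (2 * 0 + 1) p = Copp (Cplus (laplacian e (J 1%nat) p)
                                  (dz1 _ JM e (edge_first e (J 0%nat) (J 1%nat)) p)).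
Proof.
  intros H. box_unfold.
  rewrite D1star_JM_1. change (0 + 1)%nat with (S 0).
  rewrite !D0star_JM_S, !D0star_JM_0 by lia. box_expand.
  simpl Nat.mul; simpl Nat.add. ring.
Qed.

Lemma box1_JM_last_even : (3 <= k)%nat ->
  box1 JM k e J (2 * k - 2) p =
  Copp (Cplus (laplacian e (J (2 * k - 2)%nat) p)
              (dzb1 _ JM e (edge_last e (J (2 * k - 2)%nat) (J (2 * k - 1)%nat)) p)).
Proof.
  intros H. destruct k as [|[|j]]; try lia.
  replace (2 * S (S j) - 2)%nat with (2 * S j)%nat by lia.
  replace (2 * S (S j) - 1)%nat with (2 * S j + 1)%nat by lia.
  box_unfold. replace (S j + 1)%nat with (S (S j)) by lia.
  rewrite D1star_JM_even, !D0star_JM_S by lia. box_expand.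
  replace (2 * S j + 1)%nat with (2 * j + 3)%nat by lia.
  replace (2 * S j)%nat with (2 * j + 2)%nat by lia.
  ring.
Qed.

Lemma box1_JM_last_odd : (3 <= k)%nat ->
  box1 JM k e J (2 * k - 1) p =
  Copp (Cminus (laplacian e (J (2 * k - 1)%nat) p)
               (dz0 _ JM e (edge_last e (J (2 * k - 2)%nat) (J (2 * k - 1)%nat)) p)).
Proof.
  intros H. destruct k as [|[|j]]; try lia.
  replace (2 * S (S j) - 2)%nat with (2 * S j)%nat by lia.
  replace (2 * S (S j) - 1)%nat with (2 * S j + 1)%nat by lia.
  box_unfold. replace (S j + 1)%nat with (S (S j)) by lia.
  rewrite D1star_JM_odd, !D0star_JM_S by lia. box_expand.
  replace (2 * S j + 1)%nat with (2 * j + 3)%nat by lia.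
  replace (2 * S j)%nat with (2 * j + 2)%nat by lia.
  ring.
Qed.
End BoxComponents.

(* Symbols of [dz0], [dzb0], [dz1], [dzb1] at a covector [v]. *)
Definition al (v : nat -> R) : C := (v 0%nat - Ci * v 1%nat)%C.
Definition alb (v : nat -> R) : C := (v 0%nat + Ci * v 1%nat)%C.
Definition be (v : nat -> R) : C := (v 2%nat - Ci * v 3%nat)%C.
Definition beb (v : nat -> R) : C := (v 2%nat + Ci * v 3%nat)%C.

Section Symbols.
Variables (n xi : nat -> R).

Lemma dz0_djet W p : dz0 _ JM (djet n xi) W p = (Ci * al xi * W p + al n * W (S p))%C.
Proof. unfold dz0, subS, negS, djet, al. cbn [addS smulS JM]. rewrite RtoC_m1. ring. Qed.

Lemma dzb0_djet W p : dzb0 _ JM (djet n xi) W p = (Ci * alb xi * W p + alb n * W (S p))%C.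
Proof. unfold dzb0, subS, negS, djet, alb. cbn [addS smulS JM]. ring. Qed.

Lemma dz1_djet W p : dz1 _ JM (djet n xi) W p = (Ci * be xi * W p + be n * W (S p))%C.
Proof. unfold dz1, subS, negS, djet, be. cbn [addS smulS JM]. rewrite RtoC_m1. ring. Qed.

Lemma dzb1_djet W p : dzb1 _ JM (djet n xi) W p = (Ci * beb xi * W p + beb n * W (S p))%C.
Proof. unfold dzb1, subS, negS, djet, beb. cbn [addS smulS JM]. ring. Qed.

Lemma laplacian_djet W p : laplacian (djet n xi) W p =
  (dot4 n n * W (S (S p)) + 2 * (Ci * dot4 xi n) * W (S p) + RtoC (- dot4 xi xi) * W p)%C.
Proof.
  unfold laplacian. rewrite dz0_djet, dz1_djet, !dzb0_djet, !dzb1_djet.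
  unfold al, alb, be, beb, dot4. generalize (W p) (W (S p)) (W (S (S p))). intros. ceq.
Qed.

Lemma laplacian_djet_unit c W p : dot4 n n = 1 -> dot4 xi n = 0 -> c ^ 2 = dot4 xi xi ->
  laplacian (djet n xi) W p = (W (S (S p)) - RtoC (c ^ 2) * W p)%C.
Proof.
  intros Hn Hxn Hc2. rewrite laplacian_djet, Hn, Hxn, <- Hc2.
  generalize (W p) (W (S p)) (W (S (S p))). intros. ceq.
Qed.

Definition djet_symbol : nat -> (nat -> C) -> nat -> C :=
  fun l J p => (n l * J p)%C.

Lemma dz0_djet_symbol W p : dz0 _ JM djet_symbol W p = (al n * W p)%C.
Proof. unfold dz0, subS, negS, djet_symbol, al. cbn [addS smulS JM]. rewrite RtoC_m1. ring. Qed.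

Lemma dzb0_djet_symbol W p : dzb0 _ JM djet_symbol W p = (alb n * W p)%C.
Proof. unfold dzb0, subS, negS, djet_symbol, alb. cbn [addS smulS JM]. ring. Qed.

Lemma dz1_djet_symbol W p : dz1 _ JM djet_symbol W p = (be n * W p)%C.
Proof. unfold dz1, subS, negS, djet_symbol, be. cbn [addS smulS JM]. rewrite RtoC_m1. ring. Qed.

Lemma dzb1_djet_symbol W p : dzb1 _ JM djet_symbol W p = (beb n * W p)%C.
Proof. unfold dzb1, subS, negS, djet_symbol, beb. cbn [addS smulS JM]. ring. Qed.
End Symbols.

Lemma D0star_dnu k n a c :
  D0star CM k (dnu n) a c = D0star JM k (djet_symbol n) (fun r _ => a r) c 0%nat.
Proof.
  rewrite D0star_JM. unfold D0star, negS. cbn [smulS CM]. rewrite RtoC_m1.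
  match goal with |- Cmult _ ?X = Copp ?Y => transitivity (Copp X); [ring | reflexivity] end.
Qed.

Lemma D1star_dnu k n a c :
  D1star CM k (dnu n) a c = D1star JM k (djet_symbol n) (fun r _ => a r) c 0%nat.
Proof.
  rewrite D1star_JM. unfold D1star, negS. cbn [smulS CM]. rewrite RtoC_m1.
  match goal with |- Cmult _ ?X = Copp ?Y => transitivity (Copp X); [ring | reflexivity] end.
Qed.

Lemma Cmult_RtoC_eq0 (r : R) (z : C) : r <> 0 -> (r * z)%C = 0 -> z = 0.
Proof.
  intros Hr H. destruct z as [z1 z2].
  apply (f_equal fst) in H as H1. apply (f_equal snd) in H as H2.
  simpl in H1, H2. apply injective_projections; simpl.
  - replace z1 with (/ r * (r * z1 - 0 * z2)) by (field; auto). rewrite H1. ring.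
  - replace z2 with (/ r * (r * z2 + 0 * z1)) by (field; auto). rewrite H2. ring.
Qed.

Lemma exp_growth_solution (h : R -> R) (c : R) :
  (forall x, ex_derive h x) -> (forall t, 0 < t -> Derive h t = c * h t) ->
  forall t, 0 <= t -> h t = h 0 * exp (c * t).
Proof.
  intros Hd Heq t Ht.
  destruct (Req_dec t 0) as [->|Ht0]; [rewrite Rmult_0_r, exp_0; ring|].
  set (phi := fun s => h s * exp (-(c * s))).
  destruct (MVT_gen phi 0 t (fun _ => 0)) as [z [Hz E]].
  - intros x Hx. rewrite Rmin_left, Rmax_right in Hx by lra.
    unfold phi. auto_derive; [apply Hd|].
    change (fun x0 : R => h x0) with h. rewrite Heq by lra. ring.
  - intros x _. apply continuity_pt_filterlim.
    apply (@ex_derive_continuous R_AbsRing R_NormedModule).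
    unfold phi. auto_derive. apply Hd.
  - unfold phi in E. rewrite Rmult_0_r, Ropp_0, exp_0, Rmult_0_l in E.
    replace (h t) with (h t * exp (- (c * t)) * exp (c * t)).
    + replace (h t * exp (- (c * t))) with (h 0) by lra. ring.
    + rewrite Rmult_assoc, <- exp_plus. replace (- (c * t) + c * t) with 0 by ring.
      rewrite exp_0; ring.
Qed.

(* Variation of constants: [h = g' + c g] solves [h' = c h], and then
   [g - h(0) e^{ct} / 2c] solves [k' = - c k]. *)
Lemma ode2_forced_solution (f : R -> R) (c P Q : R) : 0 < c -> smooth f ->
  (forall t, 0 < t ->
     Derive (Derive f) t = c ^ 2 * f t + P * exp (c * t) + Q * exp (- (c * t))) ->
  exists K1 K2, forall t, 0 <= t ->
    f t = (K1 + P / (2 * c) * t) * exp (c * t) + (K2 - Q / (2 * c) * t) * exp (- (c * t)).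
Proof.
  intros Hc Hf Hode.
  set (g := fun s => f s - P * s * exp (c * s) / (2 * c) + Q * s * exp (- (c * s)) / (2 * c)).
  set (dg := fun s => Derive f s - P * (exp (c * s) + c * s * exp (c * s)) / (2 * c)
                      + Q * (exp (- (c * s)) - c * s * exp (- (c * s))) / (2 * c)).
  set (h := fun s => dg s + c * g s).
  assert (Hh : forall t, 0 <= t -> h t = h 0 * exp (c * t)).
  { apply exp_growth_solution.
    - intros s. unfold h, dg, g. auto_derive.
      split; [apply smooth_ex_derive_Derive; auto|split; [apply smooth_ex_derive; auto|exact I]].
    - intros s Hs. apply is_derive_unique. unfold h, dg, g.
      auto_derive.
      + split; [apply smooth_ex_derive_Derive; auto|split; [apply smooth_ex_derive; auto|exact I]].
      + change (fun x : R => Derive f x) with (Derive f). change (fun x : R => f x) with f.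
        rewrite Hode by exact Hs. field. lra. }
  set (H0 := h 0).
  set (kk := fun s => g s - H0 * exp (c * s) / (2 * c)).
  assert (Hk : forall t, 0 <= t -> kk t = kk 0 * exp (- c * t)).
  { apply exp_growth_solution.
    - intros s. unfold kk, g. auto_derive. apply smooth_ex_derive; auto.
    - intros s Hs. apply is_derive_unique.
      assert (E : dg s + c * g s = H0 * exp (c * s)) by exact (Hh s (Rlt_le _ _ Hs)).
      unfold dg, g in E.
      assert (Df : Derive f s = H0 * exp (c * s)
         - (- P * (exp (c * s) + c * s * exp (c * s)) / (2 * c)
            + Q * (exp (- (c * s)) - c * s * exp (- (c * s))) / (2 * c)
            + c * (f s - P * s * exp (c * s) / (2 * c) + Q * s * exp (- (c * s)) / (2 * c))))
        by (rewrite <- E; field; lra).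
      unfold kk, g. auto_derive; [apply smooth_ex_derive; auto|].
      change (fun x : R => f x) with f. rewrite Df. field. lra. }
  exists (H0 / (2 * c)), (kk 0). intros t Ht.
  assert (E := Hk t Ht). unfold kk, g in E. unfold kk, g.
  replace (- c * t) with (- (c * t)) in E by ring.
  replace (f t) with (((f t - P * t * exp (c * t) / (2 * c) + Q * t * exp (- (c * t)) / (2 * c))
                       - H0 * exp (c * t) / (2 * c))
       + P * t * exp (c * t) / (2 * c) - Q * t * exp (- (c * t)) / (2 * c)
       + H0 * exp (c * t) / (2 * c)) by ring.
  rewrite E. field. lra.
Qed.

Lemma t_exp_neg_le c t : 0 < c -> 0 <= t -> t * exp (- (c * t)) <= / c.
Proof.
  intros Hc Ht. rewrite exp_Ropp.
  assert (H1 := exp_ineq1_le (c * t)). assert (H2 := exp_pos (c * t)).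
  apply (Rmult_le_reg_r (exp (c * t) * c)); [apply Rmult_lt_0_compat; lra|].
  replace (t * / exp (c * t) * (exp (c * t) * c)) with (c * t) by (field; lra).
  replace (/ c * (exp (c * t) * c)) with (exp (c * t)) by (field; lra). lra.
Qed.

Lemma affine_exp_neg_bound a b c t : 0 < c -> 0 <= t ->
  Rabs ((a + b * t) * exp (- (c * t))) <= Rabs a + Rabs b / c.
Proof.
  intros Hc Ht.
  assert (E1 := exp_pos (- (c * t))).
  assert (E2 : exp (- (c * t)) <= 1).
  { destruct (Rle_lt_or_eq_dec 0 t Ht) as [Hpos| <-].
    - rewrite <- exp_0. left. apply exp_increasing. nra.
    - rewrite Rmult_0_r, Ropp_0, exp_0. lra. }
  assert (E3 := t_exp_neg_le c t Hc Ht).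
  assert (Hab : Rabs (a + b * t) <= Rabs a + Rabs b * t).
  { eapply Rle_trans; [apply Rabs_triang|]. rewrite Rabs_mult, (Rabs_pos_eq t); lra. }
  assert (0 <= Rabs a) by apply Rabs_pos. assert (0 <= Rabs b) by apply Rabs_pos.
  rewrite Rabs_mult, (Rabs_pos_eq (exp _)) by lra.
  apply Rle_trans with (Rabs a * exp (- (c * t)) + Rabs b * (t * exp (- (c * t)))); [nra|].
  assert (Rabs b * (t * exp (- (c * t))) <= Rabs b * / c) by (apply Rmult_le_compat_l; lra).
  unfold Rdiv. nra.
Qed.

Lemma affine_times_growth_bounded a b c M : 0 < c ->
  (forall t, 0 <= t -> Rabs (a + b * t) * (1 + c * t) <= M) -> a = 0 /\ b = 0.
Proof.
  intros Hc HA.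
  assert (HM : 0 <= M).
  { assert (H := HA 0 (Rle_refl 0)). assert (0 <= Rabs (a + b * 0)) by apply Rabs_pos. nra. }
  assert (Hb : b = 0).
  { destruct (Req_dec b 0) as [|Hb]; auto. exfalso.
    assert (Hp : 0 < Rabs b) by (apply Rabs_pos_lt; auto).
    set (t := (M + Rabs a + 1) / Rabs b).
    assert (Ht : 0 <= t).
    { unfold t. apply Rmult_le_pos; [assert (0 <= Rabs a) by apply Rabs_pos; lra|].
      left; apply Rinv_0_lt_compat; auto. }
    assert (H := HA t Ht).
    assert (H2 : Rabs (b * t) = M + Rabs a + 1).
    { rewrite Rabs_mult, (Rabs_pos_eq t) by auto. unfold t. field. lra. }
    assert (H3 : Rabs (b * t) <= Rabs (a + b * t) + Rabs a).
    { replace (b * t) with ((a + b * t) + - a) at 1 by ring.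
      eapply Rle_trans; [apply Rabs_triang|]. rewrite Rabs_Ropp. lra. }
    assert (0 <= c * t) by nra.
    assert (0 <= Rabs (a + b * t)) by apply Rabs_pos.
    nra. }
  split; auto. subst b.
  destruct (Req_dec a 0) as [|Ha]; auto. exfalso.
  assert (Hp : 0 < Rabs a) by (apply Rabs_pos_lt; auto).
  set (t := (M + 1) / (c * Rabs a)).
  assert (Ht : 0 <= t).
  { unfold t. apply Rmult_le_pos; [lra|]. left; apply Rinv_0_lt_compat; nra. }
  assert (H := HA t Ht). replace (a + 0 * t) with a in H by ring.
  assert (Rabs a * (c * t) = M + 1) by (unfold t; field; split; lra).
  nra.
Qed.

Lemma affine_exp_bounded a b a' b' c B : 0 < c ->
  (forall t, 0 <= t ->
     Rabs ((a + b * t) * exp (c * t) + (a' + b' * t) * exp (- (c * t))) <= B) ->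
  a = 0 /\ b = 0.
Proof.
  intros Hc HB. apply (affine_times_growth_bounded a b c (B + (Rabs a' + Rabs b' / c)) Hc).
  intros t Ht.
  assert (E1 := exp_ineq1_le (c * t)).
  assert (E2 := affine_exp_neg_bound a' b' c t Hc Ht).
  assert (E3 := HB t Ht).
  assert (E4 : Rabs ((a + b * t) * exp (c * t)) <=
               Rabs ((a + b * t) * exp (c * t) + (a' + b' * t) * exp (- (c * t)))
               + Rabs ((a' + b' * t) * exp (- (c * t)))).
  { replace ((a + b * t) * exp (c * t)) with
      (((a + b * t) * exp (c * t) + (a' + b' * t) * exp (- (c * t)))
       + - ((a' + b' * t) * exp (- (c * t)))) at 1 by ring.
    eapply Rle_trans; [apply Rabs_triang|]. rewrite Rabs_Ropp. lra. }
  rewrite Rabs_mult, (Rabs_pos_eq (exp _)) in E4 by (left; apply exp_pos).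
  assert (0 <= Rabs (a + b * t)) by apply Rabs_pos.
  nra.
Qed.

Lemma jet_ext_pos (w v : R -> C) t : 0 < t ->
  (forall s, 0 < s -> w s = v s) -> forall p, jet w t p = jet v t p.
Proof.
  intros Ht H p. unfold jet.
  assert (Hloc : locally t (fun s => 0 < s)).
  { exists (mkposreal t Ht). intros y Hy. change (Rabs (y - t) < t) in Hy.
    apply Rabs_def2 in Hy. lra. }
  f_equal; apply Derive_n_ext_loc; apply (filter_imp (fun s => 0 < s)); auto;
    intros s Hs; simpl; rewrite H; auto.
Qed.

Lemma jet_const_0 t p : jet (fun _ => RtoC 0) t p = RtoC 0.
Proof. unfold jet. simpl. destruct p; [reflexivity|]. rewrite !Derive_n_const. reflexivity. Qed.

Lemma Derive_right_ext (f g : R -> R) t : ex_derive f t -> ex_derive g t ->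
  (forall s, t <= s -> f s = g s) -> Derive f t = Derive g t.
Proof.
  intros Hf%Derive_correct%is_derive_Reals Hg%Derive_correct%is_derive_Reals H.
  set (l1 := Derive f t) in *. set (l2 := Derive g t) in *.
  destruct (Req_dec l1 l2) as [|Hne]; auto. exfalso.
  set (eps := Rabs (l1 - l2) / 2).
  assert (Heps : 0 < eps) by (unfold eps; apply Rdiv_lt_0_compat; [apply Rabs_pos_lt; lra | lra]).
  destruct (Hf eps Heps) as [d1 Hd1]. destruct (Hg eps Heps) as [d2 Hd2].
  set (h := Rmin d1 d2 / 2).
  assert (0 < d1) by apply cond_pos. assert (0 < d2) by apply cond_pos.
  assert (Rmin d1 d2 <= d1) by apply Rmin_l. assert (Rmin d1 d2 <= d2) by apply Rmin_r.
  assert (Hh : 0 < h) by (unfold h; apply Rdiv_lt_0_compat; [apply Rmin_pos | ]; lra).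
  assert (Hh1 : Rabs h < d1) by (rewrite Rabs_pos_eq; unfold h in *; lra).
  assert (Hh2 : Rabs h < d2) by (rewrite Rabs_pos_eq; unfold h in *; lra).
  specialize (Hd1 h ltac:(lra) Hh1). specialize (Hd2 h ltac:(lra) Hh2).
  rewrite (H (t + h)), (H t) in Hd1 by lra.
  assert (Rabs (l1 - l2) <= Rabs ((g (t + h) - g t) / h - l1) + Rabs ((g (t + h) - g t) / h - l2)).
  { replace (l1 - l2) with (- ((g (t + h) - g t) / h - l1) + ((g (t + h) - g t) / h - l2)) by ring.
    eapply Rle_trans; [apply Rabs_triang|]. rewrite Rabs_Ropp. lra. }
  unfold eps in *. lra.
Qed.

Lemma jet_1_right (w v : R -> C) t :
  ex_derive (fun s => fst (w s)) t -> ex_derive (fun s => snd (w s)) t ->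
  ex_derive (fun s => fst (v s)) t -> ex_derive (fun s => snd (v s)) t ->
  (forall s, t <= s -> w s = v s) -> jet w t 1%nat = jet v t 1%nat.
Proof.
  intros H1 H2 H3 H4 H. unfold jet. simpl.
  f_equal; apply Derive_right_ext; auto; intros s Hs; rewrite H; auto.
Qed.

Definition exp_decay_affine (a b : C) (c : R) : R -> C :=
  fun s => Cmult (Cplus a (Cmult b (RtoC s))) (RtoC (exp (- (c * s)))).

Definition exp_pair (A B : C) (c : R) : R -> C :=
  fun s => Cplus (Cmult A (RtoC (exp (c * s)))) (Cmult B (RtoC (exp (- (c * s))))).

Lemma exp_pair_eq_decay (A B S : C) (c : R) : 0 < c ->
  exp_pair A B c 0 = S -> exp_pair A B c 1 = (S * exp (- c))%C -> A = 0 /\ B = S.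
Proof.
  intros Hc E0 E1. unfold exp_pair in E0, E1.
  rewrite Rmult_0_r, Ropp_0, exp_0 in E0. rewrite Rmult_1_r in E1.
  assert (Hexp : exp (- c) < exp c) by (apply exp_increasing; lra).
  assert (HA : A = 0).
  { apply (Cmult_RtoC_eq0 (exp c - exp (- c))); [lra|].
    transitivity ((A * exp c + B * exp (- c)) - (A * 1 + B * 1) * exp (- c))%C;
      [destruct A, B; ceq|].
    rewrite E0, E1. ring. }
  split; [exact HA|]. rewrite <- E0, HA. destruct B; ceq.
Qed.

Lemma exp_decay_affine_derive a b c t :
  ex_derive (fun s => fst (exp_decay_affine a b c s)) t /\
  ex_derive (fun s => snd (exp_decay_affine a b c s)) t /\
  jet (exp_decay_affine a b c) t 1%nat =
    Cmult (Cminus b (Cmult (RtoC c) (Cplus a (Cmult b (RtoC t))))) (RtoC (exp (- (c * t)))).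
Proof.
  unfold exp_decay_affine. simpl. split; [|split].
  - auto_derive. auto.
  - auto_derive. auto.
  - unfold jet. simpl. destruct a as [a1 a2], b as [b1 b2]. simpl.
    apply injective_projections; simpl; apply is_derive_unique; auto_derive; auto; ring.
Qed.

Lemma exp_pair_derive A B c t :
  ex_derive (fun s => fst (exp_pair A B c s)) t /\
  ex_derive (fun s => snd (exp_pair A B c s)) t /\
  jet (exp_pair A B c) t 1%nat =
    Cminus (Cmult (Cmult (RtoC c) A) (RtoC (exp (c * t))))
           (Cmult (Cmult (RtoC c) B) (RtoC (exp (- (c * t))))).
Proof.
  unfold exp_pair. simpl. split; [|split].
  - auto_derive. auto.
  - auto_derive. auto.
  - unfold jet. simpl. destruct A as [a1 a2], B as [b1 b2]. simpl.
    apply injective_projections; simpl; apply is_derive_unique; auto_derive; auto; ring.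
Qed.

Lemma Cmod_bounds_parts (z : C) B : Cmod z <= B -> Rabs (fst z) <= B /\ Rabs (snd z) <= B.
Proof.
  intros H. assert (Hm := Rmax_Cmod z).
  assert (Rabs (fst z) <= Rmax (Rabs (fst z)) (Rabs (snd z))) by apply Rmax_l.
  assert (Rabs (snd z) <= Rmax (Rabs (fst z)) (Rabs (snd z))) by apply Rmax_r.
  split; lra.
Qed.

Lemma ode2_parts (w : R -> C) (c : R) (P Q : C) :
  (forall t, 0 < t -> jet w t 2%nat =
     Cplus (Cplus (Cmult (RtoC (c ^ 2)) (w t)) (Cmult P (RtoC (exp (c * t)))))
           (Cmult Q (RtoC (exp (- (c * t)))))) ->
  (forall t, 0 < t -> Derive (Derive (fun s => fst (w s))) t =
     c ^ 2 * fst (w t) + fst P * exp (c * t) + fst Q * exp (- (c * t))) /\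
  (forall t, 0 < t -> Derive (Derive (fun s => snd (w s))) t =
     c ^ 2 * snd (w t) + snd P * exp (c * t) + snd Q * exp (- (c * t))).
Proof.
  intros Hode. split; intros t Ht.
  - change (Derive (Derive (fun s => fst (w s))) t) with (fst (jet w t 2%nat)).
    rewrite Hode by auto. simpl. ring.
  - change (Derive (Derive (fun s => snd (w s))) t) with (snd (jet w t 2%nat)).
    rewrite Hode by auto. simpl. ring.
Qed.

Lemma bounded_forced_solution (w : R -> C) (c B : R) (P Q : C) : 0 < c -> smoothC w ->
  (forall t, 0 <= t -> Cmod (w t) <= B) ->
  (forall t, 0 < t -> jet w t 2%nat =
     Cplus (Cplus (Cmult (RtoC (c ^ 2)) (w t)) (Cmult P (RtoC (exp (c * t)))))
           (Cmult Q (RtoC (exp (- (c * t)))))) ->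
  P = RtoC 0 /\
  forall t, 0 <= t -> w t = exp_decay_affine (w 0) (Cmult (RtoC (- / (2 * c))) Q) c t.
Proof.
  intros Hc [W1 W2]%smoothC_iff HB [O1 O2]%ode2_parts.
  destruct (ode2_forced_solution _ c _ _ Hc W1 O1) as [K1 [K2 F1]].
  destruct (ode2_forced_solution _ c _ _ Hc W2 O2) as [L1 [L2 F2]].
  destruct P as [P1 P2], Q as [Q1 Q2]. simpl in F1, F2.
  destruct (affine_exp_bounded K1 (P1 / (2 * c)) K2 (- (Q1 / (2 * c))) c B Hc) as [-> HP1].
  { intros t Ht. match goal with |- Rabs ?e <= _ =>
      replace e with (fst (w t)) by (rewrite F1 by auto; ring) end.
    apply (Cmod_bounds_parts _ _ (HB t Ht)). }
  destruct (affine_exp_bounded L1 (P2 / (2 * c)) L2 (- (Q2 / (2 * c))) c B Hc) as [-> HP2].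
  { intros t Ht. match goal with |- Rabs ?e <= _ =>
      replace e with (snd (w t)) by (rewrite F2 by auto; ring) end.
    apply (Cmod_bounds_parts _ _ (HB t Ht)). }
  assert (P1 = 0) by (apply (Rmult_eq_reg_r (/ (2 * c))); [lra|]; apply Rinv_neq_0_compat; lra).
  assert (P2 = 0) by (apply (Rmult_eq_reg_r (/ (2 * c))); [lra|]; apply Rinv_neq_0_compat; lra).
  subst P1 P2. split; [reflexivity|].
  assert (Z1 := F1 0 (Rle_refl 0)). assert (Z2 := F2 0 (Rle_refl 0)).
  rewrite !Rmult_0_r, !Ropp_0, !exp_0 in Z1, Z2.
  intros t Ht. unfold exp_decay_affine. apply injective_projections; simpl.
  - rewrite F1, Z1 by auto. field. lra.
  - rewrite F2, Z2 by auto. field. lra.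
Qed.

Lemma ode2_general_solution (w : R -> C) (c : R) : 0 < c -> smoothC w ->
  (forall t, 0 < t -> jet w t 2%nat = Cmult (RtoC (c ^ 2)) (w t)) ->
  exists A B, forall t, 0 <= t -> w t = exp_pair A B c t.
Proof.
  intros Hc [W1 W2]%smoothC_iff Hode.
  destruct (ode2_parts w c (RtoC 0) (RtoC 0)) as [O1 O2].
  { intros t Ht. rewrite Hode by auto. ceq. }
  destruct (ode2_forced_solution _ c _ _ Hc W1 O1) as [K1 [K2 F1]].
  destruct (ode2_forced_solution _ c _ _ Hc W2 O2) as [L1 [L2 F2]].
  exists (K1, L1), (K2, L2). intros t Ht. unfold exp_pair. apply injective_projections; simpl.
  - rewrite F1 by auto. simpl. field. lra.
  - rewrite F2 by auto. simpl. field. lra.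
Qed.

(* An end pair [(w0, w1)] couples to the other components only through
   [s = g0 w0 + h0 w0' + g1 w1 + h1 w1'], and the system reads
   [w_i'' - c^2 w_i + q_i s + k_i s' = 0]. *)
Definition edge_comb (g0 h0 g1 h1 : C) (J0 J1 : nat -> C) (p : nat) : C :=
  (g0 * J0 p + h0 * J0 (S p) + (g1 * J1 p + h1 * J1 (S p)))%C.

Definition edge_eq (c : R) (q k : C) (s : nat -> C) (J : nat -> C) (p : nat) : C :=
  (J (S (S p)) - RtoC (c ^ 2) * J p + (q * s p + k * s (S p)))%C.

Definition edge_slope (c : R) (q k B : C) : C :=
  (RtoC (- / (2 * c)) * - ((q - c * k) * B))%C.

Section EdgePair.
Variables (c : R) (g0 h0 g1 h1 q0 k0 q1 k1 : C).
Hypothesis Hc : 0 < c.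
Hypothesis I0 : (h0 * k0 + h1 * k1)%C = 1.
Hypothesis I1 : (g0 * k0 + h0 * q0 + (g1 * k1 + h1 * q1))%C = 0.
Hypothesis I2 : (g0 * q0 + g1 * q1)%C = RtoC (- c ^ 2).

Let comb := edge_comb g0 h0 g1 h1.

(* The identities [I0]-[I2] make [s] itself solve [s'' = c^2 s]. *)
Lemma edge_comb_ode (J0 J1 : nat -> C) :
  (forall p, (p <= 1)%nat -> edge_eq c q0 k0 (comb J0 J1) J0 p = RtoC 0) ->
  (forall p, (p <= 1)%nat -> edge_eq c q1 k1 (comb J0 J1) J1 p = RtoC 0) ->
  comb J0 J1 2%nat = (RtoC (c ^ 2) * comb J0 J1 0%nat)%C.
Proof.
  intros R0 R1.
  assert (E0 := R0 0%nat ltac:(lia)). assert (E1 := R0 1%nat ltac:(lia)).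
  assert (F0 := R1 0%nat ltac:(lia)). assert (F1 := R1 1%nat ltac:(lia)).
  unfold edge_eq in *.
  set (S0 := comb J0 J1 0%nat) in *. set (S1 := comb J0 J1 1%nat) in *.
  set (S2 := comb J0 J1 2%nat) in *.
  assert (Id :
    (g0 * (J0 2%nat - RtoC (c ^ 2) * J0 0%nat + (q0 * S0 + k0 * S1))
     + h0 * (J0 3%nat - RtoC (c ^ 2) * J0 1%nat + (q0 * S1 + k0 * S2))
     + (g1 * (J1 2%nat - RtoC (c ^ 2) * J1 0%nat + (q1 * S0 + k1 * S1))
        + h1 * (J1 3%nat - RtoC (c ^ 2) * J1 1%nat + (q1 * S1 + k1 * S2))))%C
    = (S2 - RtoC (c ^ 2) * S0 + (g0 * q0 + g1 * q1) * S0
       + ((g0 * k0 + h0 * q0 + (g1 * k1 + h1 * q1)) * S1 + (h0 * k0 + h1 * k1) * S2))%C).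
  { unfold S0, S1, S2, comb, edge_comb. ring. }
  rewrite E0, E1, F0, F1, I0, I1, I2 in Id.
  assert (E : Cmult (RtoC 2) (Cminus S2 (Cmult (RtoC (c ^ 2)) S0)) = RtoC 0).
  { transitivity (Cplus (Cplus (Cminus S2 (Cmult (RtoC (c ^ 2)) S0)) (Cmult (RtoC (- c ^ 2)) S0))
                        (Cplus (Cmult (RtoC 0) S1) (Cmult (RtoC 1) S2))).
    - replace (RtoC (- c ^ 2)) with (Copp (RtoC (c ^ 2))) by ceq. ring.
    - rewrite <- Id. ring. }
  apply Cmult_RtoC_eq0 in E; [|lra].
  replace S2 with (Cplus (Cminus S2 (Cmult (RtoC (c ^ 2)) S0)) (Cmult (RtoC (c ^ 2)) S0)) by ring.
  rewrite E. ring.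
Qed.

Variables (w0 w1 : R -> C) (Bd : R).
Hypothesis S0 : smoothC w0.
Hypothesis S1 : smoothC w1.
Hypothesis B0 : forall t, 0 <= t -> Cmod (w0 t) <= Bd.
Hypothesis B1 : forall t, 0 <= t -> Cmod (w1 t) <= Bd.
Hypothesis R0 : forall t p, 0 < t ->
  edge_eq c q0 k0 (comb (jet w0 t) (jet w1 t)) (jet w0 t) p = 0.
Hypothesis R1 : forall t p, 0 < t ->
  edge_eq c q1 k1 (comb (jet w0 t) (jet w1 t)) (jet w1 t) p = 0.

Let s := addS FM (addS FM (smulS FM g0 w0) (smulS FM h0 (Cderive w0)))
                 (addS FM (smulS FM g1 w1) (smulS FM h1 (Cderive w1))).

Lemma smoothC_edge_sum : smoothC s.
Proof.
  apply smoothC_add; apply smoothC_add; apply smoothC_scal; auto; apply smoothC_Cderive; auto.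
Qed.

Lemma jet_edge_sum t : jet s t = comb (jet w0 t) (jet w1 t).
Proof.
  assert (D0 := smoothC_Cderive _ S0). assert (D1 := smoothC_Cderive _ S1).
  apply functional_extensionality; intros p. unfold s.
  rewrite jet_add by (apply smoothC_add; apply smoothC_scal; auto).
  rewrite !jet_add by (apply smoothC_scal; auto).
  rewrite !jet_scal, !jet_Cderive by auto. reflexivity.
Qed.

Lemma edge_sum_exp_pair : exists A B, forall t, 0 <= t -> s t = exp_pair A B c t.
Proof.
  apply ode2_general_solution; [exact Hc|apply smoothC_edge_sum|].
  intros t Ht. rewrite <- (jet_0 s t), jet_edge_sum.
  apply edge_comb_ode; intros p _; auto.
Qed.

Lemma edge_component_decay (A B : C) (w : R -> C) (q k : C) :
  (forall t, 0 <= t -> s t = exp_pair A B c t) ->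
  smoothC w -> (forall t, 0 <= t -> Cmod (w t) <= Bd) ->
  (forall t, 0 < t -> edge_eq c q k (comb (jet w0 t) (jet w1 t)) (jet w t) 0 = RtoC 0) ->
  forall t, 0 <= t -> w t = exp_decay_affine (w 0) (edge_slope c q k B) c t.
Proof.
  intros Hs Sw Bw Rw.
  refine (proj2 (bounded_forced_solution w c Bd (Copp (Cmult (Cplus q (Cmult (RtoC c) k)) A))
                   (Copp (Cmult (Cminus q (Cmult (RtoC c) k)) B)) Hc Sw Bw _)).
  intros t Ht. assert (E := Rw t Ht). unfold edge_eq in E.
  rewrite <- jet_edge_sum, jet_0, jet_0 in E.
  assert (Hs1 : jet s t 1%nat = jet (exp_pair A B c) t 1%nat).
  { destruct (smoothC_edge_sum 1%nat t) as [Ds1 Ds2].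
    destruct (exp_pair_derive A B c t) as [De1 [De2 _]].
    apply jet_1_right; auto. intros; apply Hs; lra. }
  rewrite Hs1, Hs, (proj2 (proj2 (exp_pair_derive A B c t))) in E by lra.
  set (J2 := jet w t 2%nat) in *.
  replace J2 with (Cplus (Cplus (Cminus J2 (Cmult (RtoC (c ^ 2)) (w t)))
       (Cplus (Cmult q (exp_pair A B c t))
              (Cmult k (Cminus (Cmult (Cmult (RtoC c) A) (RtoC (exp (c * t))))
                               (Cmult (Cmult (RtoC c) B) (RtoC (exp (- (c * t)))))))))
     (Cminus (Cmult (RtoC (c ^ 2)) (w t))
       (Cplus (Cmult q (exp_pair A B c t))
              (Cmult k (Cminus (Cmult (Cmult (RtoC c) A) (RtoC (exp (c * t))))
                               (Cmult (Cmult (RtoC c) B) (RtoC (exp (- (c * t)))))))))) by ring.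
  rewrite E. unfold exp_pair. ring.
Qed.

Lemma edge_pair_solution : exists B : C,
  (forall t, 0 <= t -> w0 t = exp_decay_affine (w0 0) (edge_slope c q0 k0 B) c t) /\
  (forall t, 0 <= t -> w1 t = exp_decay_affine (w1 0) (edge_slope c q1 k1 B) c t) /\
  B = ((g0 - c * h0) * w0 0 + h0 * edge_slope c q0 k0 B
       + ((g1 - c * h1) * w1 0 + h1 * edge_slope c q1 k1 B))%C.
Proof.
  destruct edge_sum_exp_pair as [A [B Hsg]].
  assert (W0 := edge_component_decay A B w0 q0 k0 Hsg S0 B0 (fun t Ht => R0 t 0 Ht)).
  assert (W1 := edge_component_decay A B w1 q1 k1 Hsg S1 B1 (fun t Ht => R1 t 0 Ht)).
  set (a0 := w0 0) in *. set (a1 := w1 0) in *.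
  set (b0 := edge_slope c q0 k0 B) in *. set (b1 := edge_slope c q1 k1 B) in *.
  assert (Sv : forall t, 0 <= t -> s t =
    (g0 * exp_decay_affine a0 b0 c t + h0 * ((b0 - c * (a0 + b0 * t)) * exp (- (c * t)))
     + (g1 * exp_decay_affine a1 b1 c t + h1 * ((b1 - c * (a1 + b1 * t)) * exp (- (c * t)))))%C).
  { intros t Ht. rewrite <- (jet_0 s t), jet_edge_sum. unfold comb, edge_comb.
    rewrite !jet_0, <- W0, <- W1 by auto.
    destruct (S0 1%nat t), (S1 1%nat t).
    destruct (exp_decay_affine_derive a0 b0 c t) as [? [? E0]].
    destruct (exp_decay_affine_derive a1 b1 c t) as [? [? E1]].
    rewrite (jet_1_right w0 (exp_decay_affine a0 b0 c) t),
            (jet_1_right w1 (exp_decay_affine a1 b1 c) t);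
      [now rewrite E0, E1|..]; auto; intros; [apply W1 | apply W0]; lra. }
  assert (Tau : ((g0 - c * h0) * b0 + (g1 - c * h1) * b1)%C = 0).
  { unfold b0, b1, edge_slope.
    transitivity (RtoC (- / (2 * c)) * - B
      * ((g0 * q0 + g1 * q1) - c * (g0 * k0 + h0 * q0 + (g1 * k1 + h1 * q1))
         + c * c * (h0 * k0 + h1 * k1)))%C; [ring|].
    rewrite I0, I1, I2. destruct B. ceq. }
  set (sgm := ((g0 - c * h0) * a0 + h0 * b0 + ((g1 - c * h1) * a1 + h1 * b1))%C).
  assert (Hs : forall t, 0 <= t -> s t = (sgm * exp (- (c * t)))%C).
  { intros t Ht. rewrite Sv by exact Ht. unfold exp_decay_affine.
    transitivity (sgm * exp (- (c * t))
                  + t * ((g0 - c * h0) * b0 + (g1 - c * h1) * b1) * exp (- (c * t)))%C;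
      [unfold sgm; ring|].
    rewrite Tau. ring. }
  destruct (exp_pair_eq_decay A B sgm c Hc) as [_ HB].
  - rewrite <- Hsg, Hs by lra. rewrite Rmult_0_r, Ropp_0, exp_0. ceq.
  - rewrite <- Hsg, Hs by lra. rewrite Rmult_1_r. reflexivity.
  - exists B. auto.
Qed.
End EdgePair.

Lemma Cmod_eq_of_add_eq0 (a b : C) : (a + b)%C = 0 -> Cmod a = Cmod b.
Proof.
  intros H. assert (a = (- b)%C).
  { replace a with (a + b - b)%C by ring. rewrite H. ring. }
  subst. apply Cmod_opp.
Qed.

Lemma Cmod_le_of_add3_eq0 (a b d : C) : (a + b + d)%C = 0 -> Cmod a <= Cmod b + Cmod d.
Proof.
  intros H. assert (a = (- (b + d))%C).
  { replace a with (a + b + d - (b + d))%C by ring. rewrite H. ring. }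
  subst. rewrite Cmod_opp. apply Cmod_triangle.
Qed.

Lemma Cmod_RtoC_mult_nonneg (r : R) (z : C) : 0 <= r -> Cmod (r * z)%C = r * Cmod z.
Proof. intros. rewrite Cmod_mult, Cmod_R, Rabs_pos_eq; auto. Qed.

Section CoupledRecurrence.
Variables (c y : R) (K : C).
Hypothesis Hc : 0 < c.
Hypothesis Hy : - c <= y <= c.
Hypothesis HK : Cmod K <= c.

Lemma recurrence_first_step (x0 x1 : C) :
  Cplus (Cmult (RtoC ((y + c) ^ 2 + 4 * c ^ 2)) x0)
        (Cmult (RtoC (3 * c + y)) (Cmult K x1)) = RtoC 0 ->
  Cmod x0 <= Cmod x1.
Proof.
  intros R0%Cmod_eq_of_add_eq0.
  rewrite !Cmod_RtoC_mult_nonneg, Cmod_mult in R0 by nra.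
  assert (0 <= Cmod x0) by apply Cmod_ge_0. assert (0 <= Cmod x1) by apply Cmod_ge_0.
  assert (0 <= Cmod K) by apply Cmod_ge_0.
  assert (E : (3 * c + y) * (Cmod K * Cmod x1) <= (3 * c + y) * (c * Cmod x1)).
  { apply Rmult_le_compat_l; [lra|]. apply Rmult_le_compat_r; lra. }
  assert (Hd : 0 < (y + c) ^ 2 + 4 * c ^ 2 - (3 * c + y) * c) by nra.
  apply (Rmult_le_reg_l ((y + c) ^ 2 + 4 * c ^ 2)); [nra|].
  assert ((3 * c + y) * c * Cmod x1 <= ((y + c) ^ 2 + 4 * c ^ 2) * Cmod x1)
    by (apply Rmult_le_compat_r; lra).
  nra.
Qed.

Lemma recurrence_interior_step (xm x0 x1 : C) :
  Cplus (Cplus (Cmult (RtoC (2 * c)) x0) (Cmult (Cconj K) xm)) (Cmult K x1) = RtoC 0 ->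
  Cmod xm <= Cmod x0 -> Cmod x0 <= Cmod x1.
Proof.
  intros RM%Cmod_le_of_add3_eq0 Hm.
  rewrite Cmod_RtoC_mult_nonneg, !Cmod_mult, Cmod_conj in RM by lra.
  assert (0 <= Cmod xm) by apply Cmod_ge_0. assert (0 <= Cmod x1) by apply Cmod_ge_0.
  assert (0 <= Cmod K) by apply Cmod_ge_0.
  assert (Cmod K * Cmod xm <= c * Cmod xm) by (apply Rmult_le_compat_r; lra).
  assert (Cmod K * Cmod x1 <= c * Cmod x1) by (apply Rmult_le_compat_r; lra).
  nra.
Qed.

Lemma recurrence_last_step (xm x0 : C) :
  Cplus (Cmult (RtoC ((y - c) ^ 2 + 4 * c ^ 2)) x0)
        (Cmult (RtoC (3 * c - y)) (Cmult (Cconj K) xm)) = RtoC 0 ->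
  Cmod xm <= Cmod x0 -> x0 = RtoC 0.
Proof.
  intros RL%Cmod_eq_of_add_eq0 Hm. apply Cmod_eq_0.
  rewrite !Cmod_RtoC_mult_nonneg, Cmod_mult, Cmod_conj in RL by nra.
  assert (0 <= Cmod xm) by apply Cmod_ge_0. assert (0 <= Cmod x0) by apply Cmod_ge_0.
  assert (0 <= Cmod K) by apply Cmod_ge_0.
  assert (Cmod K * Cmod xm <= c * Cmod x0) by (apply Rmult_le_compat; lra).
  assert (0 < y ^ 2 - c * y + 2 * c ^ 2) by nra.
  nra.
Qed.

(* The middle rows make [|x_j|] nondecreasing, and the last row then kills [x_{k-2}]. *)
Lemma coupled_recurrence_zero (k : nat) (x : nat -> C) : (3 <= k)%nat ->
  Cplus (Cmult (RtoC ((y + c) ^ 2 + 4 * c ^ 2)) (x 0%nat))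
        (Cmult (RtoC (3 * c + y)) (Cmult K (x 1%nat))) = RtoC 0 ->
  (forall j, (1 <= j)%nat -> (j <= k - 3)%nat ->
     Cplus (Cplus (Cmult (RtoC (2 * c)) (x j)) (Cmult (Cconj K) (x (j - 1)%nat)))
           (Cmult K (x (S j))) = RtoC 0) ->
  Cplus (Cmult (RtoC ((y - c) ^ 2 + 4 * c ^ 2)) (x (k - 2)%nat))
        (Cmult (RtoC (3 * c - y)) (Cmult (Cconj K) (x (k - 3)%nat))) = RtoC 0 ->
  forall j, (j <= k - 2)%nat -> x j = RtoC 0.
Proof.
  intros Hk R0 RM RL.
  assert (mono : forall j, (j <= k - 3)%nat -> Cmod (x j) <= Cmod (x (S j))).
  { induction j as [|j IH]; intros Hj; [exact (recurrence_first_step _ _ R0)|].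
    apply (recurrence_interior_step (x j)); [|apply IH; lia].
    specialize (RM (S j) ltac:(lia) Hj). now replace (S j - 1)%nat with j in RM by lia. }
  assert (chain : forall d j, (j + d = k - 2)%nat -> Cmod (x j) <= Cmod (x (k - 2)%nat)).
  { induction d as [|d IH]; intros j Hj.
    - replace j with (k - 2)%nat by lia. lra.
    - eapply Rle_trans; [apply mono; lia | apply IH; lia]. }
  assert (Hlast : x (k - 2)%nat = RtoC 0).
  { apply (recurrence_last_step (x (k - 3)%nat)); [exact RL|apply (chain 1%nat); lia]. }
  intros j Hj. apply Cmod_eq_0.
  assert (H := chain (k - 2 - j)%nat j ltac:(lia)).
  rewrite Hlast, Cmod_0 in H. assert (0 <= Cmod (x j)) by apply Cmod_ge_0. lra.
Qed.
End CoupledRecurrence.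

(* The components of [n /\ xi] for the complex structure [(x0 + i x1, x2 + i x3)];
   Lagrange's identity gives [|cross|^2 + sympl^2 = |n|^2 |xi|^2 - (n . xi)^2]. *)
Definition sympl (n xi : nat -> R) : R :=
  xi 1%nat * n 0%nat - xi 0%nat * n 1%nat + xi 2%nat * n 3%nat - xi 3%nat * n 2%nat.
Definition cross (n xi : nat -> R) : C := (Ci * (be xi * alb n - alb xi * be n))%C.

(* Coefficients [g_i], [q_i] of the edge systems of the first and the last pair (their
   [h_i], [k_i] are symbols of [n]). *)
Definition g0_first (xi : nat -> R) := Cmult Ci (al xi).
Definition g1_first (xi : nat -> R) := Cmult Ci (beb xi).
Definition q0_first (xi : nat -> R) := Cmult Ci (alb xi).
Definition q1_first (xi : nat -> R) := Cmult Ci (be xi).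
Definition g0_last (xi : nat -> R) := Cmult Ci (be xi).
Definition g1_last (xi : nat -> R) := Copp (Cmult Ci (alb xi)).
Definition q0_last (xi : nat -> R) := Cmult Ci (beb xi).
Definition q1_last (xi : nat -> R) := Copp (Cmult Ci (al xi)).

(* Eliminating the slope [B] of an end pair between the relation defining it
   and the first (or last) row of [D1 u = 0]. *)
Lemma slope_elim (c y : R) (x0 W B : C) : 0 < c ->
  B = (RtoC (y - c) * x0 + RtoC (- ((y + c) / (2 * c))) * B)%C ->
  (RtoC (2 * c) * x0 + W + RtoC ((y + c) / (2 * c)) * B)%C = 0 ->
  (RtoC ((y + c) ^ 2 + 4 * c ^ 2) * x0 + RtoC (3 * c + y) * W)%C = 0.
Proof.
  intros Hc EB EP.
  destruct x0 as [p1 p2], W as [w1 w2], B as [b1 b2].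
  apply (f_equal fst) in EB as EB1. apply (f_equal snd) in EB as EB2.
  apply (f_equal fst) in EP as EP1. apply (f_equal snd) in EP as EP2.
  simpl in EB1, EB2, EP1, EP2.
  apply injective_projections; simpl.
  - assert (E1 : 2 * c * p1 + w1 + (y + c) / (2 * c) * b1 = 0) by (rewrite <- EP1; ring).
    assert (E2 : b1 - ((y - c) * p1 - (y + c) / (2 * c) * b1) = 0) by (rewrite EB1 at 1; ring).
    transitivity ((3 * c + y) * (2 * c * p1 + w1 + (y + c) / (2 * c) * b1)
                  - (y + c) * (b1 - ((y - c) * p1 - (y + c) / (2 * c) * b1))); [field; lra|].
    rewrite E1, E2. ring.
  - assert (E1 : 2 * c * p2 + w2 + (y + c) / (2 * c) * b2 = 0) by (rewrite <- EP2; ring).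
    assert (E2 : b2 - ((y - c) * p2 - (y + c) / (2 * c) * b2) = 0) by (rewrite EB2 at 1; ring).
    transitivity ((3 * c + y) * (2 * c * p2 + w2 + (y + c) / (2 * c) * b2)
                  - (y + c) * (b2 - ((y - c) * p2 - (y + c) / (2 * c) * b2))); [field; lra|].
    rewrite E1, E2. ring.
Qed.

Section BoundaryAlgebra.
Variables (n xi : nat -> R) (c : R).
Hypothesis Hn : dot4 n n = 1.
Hypothesis Hxn : dot4 xi n = 0.
Hypothesis Hc2 : c ^ 2 = dot4 xi xi.
Hypothesis Hc : 0 < c.

Ltac split_parts := unfold cross, sympl, al, alb, be, beb; apply injective_projections; simpl.

Ltac use_xi_perp_n := first
  [ transitivity (dot4 xi n); [unfold dot4; ring | rewrite Hxn; ring]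
  | transitivity (- dot4 xi n); [unfold dot4; ring | rewrite Hxn; ring]
  | transitivity (2 * dot4 xi n); [unfold dot4; ring | rewrite Hxn; ring]
  | transitivity (- 2 * dot4 xi n); [unfold dot4; ring | rewrite Hxn; ring]
  | ring ].

Ltac use_n_unit := transitivity (dot4 n n); [unfold dot4; ring | auto].

(* On the decaying mode [e^{-ct}], [d/dx_l] acts as [i xi_l - c n_l]. *)
Local Notation a0 := (Ci * al xi - c * al n)%C.
Local Notation ab0 := (Ci * alb xi - c * alb n)%C.
Local Notation a1 := (Ci * be xi - c * be n)%C.
Local Notation ab1 := (Ci * beb xi - c * beb n)%C.

Lemma symbol_norm_first : (al n * alb n + beb n * be n)%C = 1.
Proof. split_parts; [use_n_unit | ring]. Qed.

Lemma symbol_norm_last : (be n * beb n + - alb n * - al n)%C = 1.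
Proof. split_parts; [use_n_unit | ring]. Qed.

Lemma cross_conj_expr : (a0 * beb n + ab1 * - al n)%C = Cconj (cross n xi).
Proof. split_parts; ring. Qed.

Lemma cross_sympl_norm : Cmod (cross n xi) ^ 2 + sympl n xi ^ 2 = c ^ 2.
Proof.
  rewrite Cmod2_alt, Hc2. transitivity (dot4 n n * dot4 xi xi - (dot4 xi n) ^ 2).
  - unfold cross, sympl, al, alb, be, beb, dot4, Re, Im. simpl. ring.
  - rewrite Hn, Hxn. ring.
Qed.

Lemma Cmod_cross_le : Cmod (cross n xi) <= c.
Proof.
  assert (H := cross_sympl_norm). assert (0 <= Cmod (cross n xi)) by apply Cmod_ge_0. nra.
Qed.

Lemma sympl_bounds : - c <= sympl n xi <= c.
Proof.
  assert (H := cross_sympl_norm). assert (0 <= Cmod (cross n xi)) by apply Cmod_ge_0.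
  split; nra.
Qed.

Lemma decay_trace_first : (a0 * alb n + ab1 * be n)%C = RtoC (sympl n xi - c).
Proof.
  split_parts; [|use_xi_perp_n].
  transitivity (sympl n xi - c * dot4 n n); [unfold sympl, dot4; ring|].
  rewrite Hn; unfold sympl; ring.
Qed.

Lemma decay_trace_last : (a1 * beb n + ab0 * al n)%C = RtoC (- sympl n xi - c).
Proof.
  split_parts; [|use_xi_perp_n].
  transitivity (- sympl n xi - c * dot4 n n); [unfold sympl, dot4; ring|].
  rewrite Hn; unfold sympl; ring.
Qed.

Lemma slope_coef_first :
  (al n * (q0_first xi - c * alb n) + beb n * (q1_first xi - c * be n))%C = RtoC (- sympl n xi - c).
Proof.
  unfold q0_first, q1_first. split_parts; [|use_xi_perp_n].
  transitivity (- sympl n xi - c * dot4 n n); [unfold sympl, dot4; ring|].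
  rewrite Hn; unfold sympl; ring.
Qed.

Lemma slope_coef_last :
  (be n * (q0_last xi - c * beb n) + - alb n * (q1_last xi - c * - al n))%C = RtoC (sympl n xi - c).
Proof.
  unfold q0_last, q1_last. split_parts; [|use_xi_perp_n].
  transitivity (sympl n xi - c * dot4 n n); [unfold sympl, dot4; ring|].
  rewrite Hn; unfold sympl; ring.
Qed.

Lemma D1_djet_at_0 (J : nat -> nat -> C) j : D1 _ JM (djet n xi) J j 0%nat =
  (- (Ci * al xi * J (2 * j)%nat 0%nat + al n * J (2 * j)%nat 1%nat)
   - (Ci * beb xi * J (2 * j + 1)%nat 0%nat + beb n * J (2 * j + 1)%nat 1%nat)
   - - (Ci * be xi * J (2 * j + 2)%nat 0%nat + be n * J (2 * j + 2)%nat 1%nat)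
   + - (Ci * alb xi * J (2 * j + 3)%nat 0%nat + alb n * J (2 * j + 3)%nat 1%nat))%C.
Proof.
  unfold D1, subS, negS. cbn [addS smulS JM].
  rewrite dz0_djet, dz1_djet, dzb0_djet, dzb1_djet, RtoC_m1. ring.
Qed.

Lemma D1_row_interior (J : nat -> nat -> C) j (xm x0 x1 : C) :
  J (2 * j)%nat 0%nat = (alb n * x0 - beb n * xm)%C ->
  J (2 * j + 1)%nat 0%nat = (be n * x0 + al n * xm)%C ->
  J (2 * j + 2)%nat 0%nat = (alb n * x1 - beb n * x0)%C ->
  J (2 * j + 3)%nat 0%nat = (be n * x1 + al n * x0)%C ->
  J (2 * j)%nat 1%nat = (RtoC (- c) * J (2 * j)%nat 0%nat)%C ->
  J (2 * j + 1)%nat 1%nat = (RtoC (- c) * J (2 * j + 1)%nat 0%nat)%C ->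
  J (2 * j + 2)%nat 1%nat = (RtoC (- c) * J (2 * j + 2)%nat 0%nat)%C ->
  J (2 * j + 3)%nat 1%nat = (RtoC (- c) * J (2 * j + 3)%nat 0%nat)%C ->
  D1 _ JM (djet n xi) J j 0%nat =
    (RtoC (2 * c) * x0 + Cconj (cross n xi) * xm + cross n xi * x1)%C.
Proof.
  intros H0 H1 H2 H3 V0 V1 V2 V3. rewrite D1_djet_at_0, V0, V1, V2, V3, H0, H1, H2, H3.
  rewrite <- cross_conj_expr.
  transitivity (- ((a0 * alb n + ab1 * be n) + (a1 * beb n + ab0 * al n)) * x0
                + (a0 * beb n + ab1 * - al n) * xm + cross n xi * x1)%C.
  - unfold cross. replace (RtoC (- c)) with (Copp (RtoC c)) by ceq. ring.
  - rewrite decay_trace_first, decay_trace_last. do 3 f_equal. ceq.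
Qed.

Lemma D1_row_first (J : nat -> nat -> C) (x0 x1 B : C) :
  J 0%nat 0%nat = (alb n * x0)%C ->
  J 1%nat 0%nat = (be n * x0)%C ->
  J 2%nat 0%nat = (alb n * x1 - beb n * x0)%C ->
  J 3%nat 0%nat = (be n * x1 + al n * x0)%C ->
  J 2%nat 1%nat = (RtoC (- c) * J 2%nat 0%nat)%C ->
  J 3%nat 1%nat = (RtoC (- c) * J 3%nat 0%nat)%C ->
  J 0%nat 1%nat = (RtoC (- c) * J 0%nat 0%nat + edge_slope c (q0_first xi) (alb n) B)%C ->
  J 1%nat 1%nat = (RtoC (- c) * J 1%nat 0%nat + edge_slope c (q1_first xi) (be n) B)%C ->
  B = ((g0_first xi - c * al n) * J 0%nat 0%nat + al n * edge_slope c (q0_first xi) (alb n) B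
       + ((g1_first xi - c * beb n) * J 1%nat 0%nat
          + beb n * edge_slope c (q1_first xi) (be n) B))%C ->
  D1 _ JM (djet n xi) J 0%nat 0%nat = 0 ->
  (RtoC ((sympl n xi + c) ^ 2 + 4 * c ^ 2) * x0
   + RtoC (3 * c + sympl n xi) * (cross n xi * x1))%C = 0.
Proof.
  intros A0 A1 A2 A3 V2 V3 V0 V1 HB HD.
  rewrite D1_djet_at_0 in HD. simpl Nat.mul in HD. simpl Nat.add in HD.
  rewrite V0, V1, V2, V3, A0, A1, A2, A3 in HD. rewrite A0, A1 in HB.
  apply (slope_elim c (sympl n xi) x0 (Cmult (cross n xi) x1) B Hc).
  - rewrite HB at 1. rewrite <- decay_trace_first.
    transitivity ((a0 * alb n + ab1 * be n) * x0
      + RtoC (- / (2 * c)) * - (al n * (q0_first xi - c * alb n) + beb n * (q1_first xi - c * be n))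
        * B)%C; [unfold edge_slope, g0_first, g1_first; ring|].
    rewrite slope_coef_first. f_equal. f_equal. apply injective_projections; simpl; field; lra.
  - rewrite <- HD.
    transitivity (- ((a0 * alb n + ab1 * be n) + (a1 * beb n + ab0 * al n)) * x0
      + cross n xi * x1
      + RtoC (/ (2 * c)) * - (al n * (q0_first xi - c * alb n) + beb n * (q1_first xi - c * be n))
        * B)%C.
    + rewrite decay_trace_first, decay_trace_last, slope_coef_first.
      f_equal; [f_equal; f_equal; ceq|]. f_equal. apply injective_projections; simpl; field; lra.
    + unfold cross, edge_slope, q0_first, q1_first.
      replace (RtoC (- c)) with (Copp (RtoC c)) by ceq.
      replace (RtoC (- / (2 * c))) with (Copp (RtoC (/ (2 * c)))) by ceq. ring.
Qed.

Lemma D1_row_last (J : nat -> nat -> C) j (xm x0 B : C) :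
  J (2 * j)%nat 0%nat = (alb n * x0 - beb n * xm)%C ->
  J (2 * j + 1)%nat 0%nat = (be n * x0 + al n * xm)%C ->
  J (2 * j + 2)%nat 0%nat = (- (beb n * x0))%C ->
  J (2 * j + 3)%nat 0%nat = (al n * x0)%C ->
  J (2 * j)%nat 1%nat = (RtoC (- c) * J (2 * j)%nat 0%nat)%C ->
  J (2 * j + 1)%nat 1%nat = (RtoC (- c) * J (2 * j + 1)%nat 0%nat)%C ->
  J (2 * j + 2)%nat 1%nat =
    (RtoC (- c) * J (2 * j + 2)%nat 0%nat + edge_slope c (q0_last xi) (beb n) B)%C ->
  J (2 * j + 3)%nat 1%nat =
    (RtoC (- c) * J (2 * j + 3)%nat 0%nat + edge_slope c (q1_last xi) (- al n) B)%C ->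
  B = ((g0_last xi - c * be n) * J (2 * j + 2)%nat 0%nat
       + be n * edge_slope c (q0_last xi) (beb n) B
       + ((g1_last xi - c * - alb n) * J (2 * j + 3)%nat 0%nat
          + - alb n * edge_slope c (q1_last xi) (- al n) B))%C ->
  D1 _ JM (djet n xi) J j 0%nat = 0 ->
  (RtoC ((sympl n xi - c) ^ 2 + 4 * c ^ 2) * x0
   + RtoC (3 * c - sympl n xi) * (Cconj (cross n xi) * xm))%C = 0.
Proof.
  intros A0 A1 A2 A3 V0 V1 V2 V3 HB HD.
  rewrite D1_djet_at_0, V0, V1, V2, V3, A0, A1, A2, A3 in HD. rewrite A2, A3 in HB.
  assert (E := slope_elim c (- sympl n xi) (- x0)%C (- (Cconj (cross n xi) * xm))%C B Hc).
  replace (- sympl n xi + c) with (- (sympl n xi - c)) in E by ring.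
  replace (3 * c + - sympl n xi) with (3 * c - sympl n xi) in E by ring.
  replace ((- (sympl n xi - c)) ^ 2) with ((sympl n xi - c) ^ 2) in E by ring.
  transitivity (- (RtoC ((sympl n xi - c) ^ 2 + 4 * c ^ 2) * - x0
                   + RtoC (3 * c - sympl n xi) * - (Cconj (cross n xi) * xm)))%C; [ring|].
  rewrite E; [ceq| |].
  - rewrite HB at 1.
    transitivity (- (a1 * beb n + ab0 * al n) * x0
      + RtoC (- / (2 * c))
        * - (be n * (q0_last xi - c * beb n) + - alb n * (q1_last xi - c * - al n))
        * B)%C; [unfold edge_slope, g0_last, g1_last; ring|].
    rewrite decay_trace_last, slope_coef_last. apply injective_projections; simpl; field; lra.
  - transitivity (- ((RtoC (2 * c) * x0 + Cconj (cross n xi) * xm)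
                     + RtoC (/ (2 * c)) * RtoC (sympl n xi - c) * B))%C;
      [apply injective_projections; simpl; field; lra|].
    rewrite <- slope_coef_last, <- cross_conj_expr.
    match type of HD with ?L = _ => transitivity (Copp L); [|rewrite HD; ceq] end.
    transitivity (- ((- ((a0 * alb n + ab1 * be n) + (a1 * beb n + ab0 * al n))) * x0
      + (a0 * beb n + ab1 * - al n) * xm
      + RtoC (/ (2 * c)) * (be n * (q0_last xi - c * beb n) + - alb n * (q1_last xi - c * - al n))
        * B))%C.
    + rewrite decay_trace_first, decay_trace_last. f_equal. f_equal. f_equal. f_equal. ceq.
    + unfold edge_slope, q0_last, q1_last. replace (RtoC (- c)) with (Copp (RtoC c)) by ceq.
      replace (RtoC (- / (2 * c))) with (Copp (RtoC (/ (2 * c)))) by ceq. ring.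
Qed.

Lemma edge_first_I1 :
  (g0_first xi * alb n + al n * q0_first xi + (g1_first xi * be n + beb n * q1_first xi))%C = 0.
Proof. unfold g0_first, q0_first, g1_first, q1_first. split_parts; use_xi_perp_n. Qed.

Lemma edge_first_I2 : (g0_first xi * q0_first xi + g1_first xi * q1_first xi)%C = RtoC (- c ^ 2).
Proof.
  unfold g0_first, q0_first, g1_first, q1_first. split_parts; [|ring].
  transitivity (- dot4 xi xi); [unfold dot4; ring | rewrite <- Hc2; ring].
Qed.

Lemma edge_last_I1 :
  (g0_last xi * beb n + be n * q0_last xi + (g1_last xi * - al n + - alb n * q1_last xi))%C = 0.
Proof. unfold g0_last, q0_last, g1_last, q1_last. split_parts; use_xi_perp_n. Qed.

Lemma edge_last_I2 : (g0_last xi * q0_last xi + g1_last xi * q1_last xi)%C = RtoC (- c ^ 2).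
Proof.
  unfold g0_last, q0_last, g1_last, q1_last. split_parts; [|ring].
  transitivity (- dot4 xi xi); [unfold dot4; ring | rewrite <- Hc2; ring].
Qed.

Lemma edge_first_slope_zero (B : C) :
  B = ((g0_first xi - c * al n) * 0 + al n * edge_slope c (q0_first xi) (alb n) B
       + ((g1_first xi - c * beb n) * 0 + beb n * edge_slope c (q1_first xi) (be n) B))%C ->
  B = 0.
Proof.
  intros HB. assert (Hy := sympl_bounds).
  apply (Cmult_RtoC_eq0 ((3 * c + sympl n xi) / (2 * c)));
    [apply Rgt_not_eq, Rdiv_lt_0_compat; lra|].
  transitivity (B - RtoC (- / (2 * c)) * - (al n * (q0_first xi - c * alb n)
                                         + beb n * (q1_first xi - c * be n)) * B)%C.
  - rewrite slope_coef_first. destruct B; apply injective_projections; simpl; field; lra.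
  - rewrite HB at 1. unfold edge_slope. ring.
Qed.

Lemma edge_last_slope_zero (B : C) :
  B = ((g0_last xi - c * be n) * 0 + be n * edge_slope c (q0_last xi) (beb n) B
       + ((g1_last xi - c * - alb n) * 0 + - alb n * edge_slope c (q1_last xi) (- al n) B))%C ->
  B = 0.
Proof.
  intros HB. assert (Hy := sympl_bounds).
  apply (Cmult_RtoC_eq0 ((3 * c - sympl n xi) / (2 * c)));
    [apply Rgt_not_eq, Rdiv_lt_0_compat; lra|].
  transitivity (B - RtoC (- / (2 * c)) * - (be n * (q0_last xi - c * beb n)
                                         + - alb n * (q1_last xi - c * - al n)) * B)%C.
  - rewrite slope_coef_last. destruct B; apply injective_projections; simpl; field; lra.
  - rewrite HB at 1. unfold edge_slope. ring.
Qed.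
End BoundaryAlgebra.

Lemma exp_decay_affine_jet_0 (w : R -> C) (a b : C) (c : R) : smoothC w ->
  (forall t, 0 <= t -> w t = exp_decay_affine a b c t) ->
  w 0 = a /\ jet w 0 1%nat = Cplus (Cmult (RtoC (- c)) (w 0)) b.
Proof.
  intros Hw H.
  assert (Ha : w 0 = a).
  { rewrite H by lra. unfold exp_decay_affine.
    rewrite Rmult_0_r, Ropp_0, exp_0. destruct a, b; ceq. }
  split; auto.
  destruct (Hw 1%nat 0). destruct (exp_decay_affine_derive a b c 0) as [? [? E]].
  rewrite (jet_1_right w (exp_decay_affine a b c) 0), E, Ha by auto.
  rewrite Rmult_0_r, Ropp_0, exp_0. destruct a, b; ceq.
Qed.

Lemma Copp_eq0 (z : C) : Copp z = RtoC 0 -> z = RtoC 0.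
Proof. intros H. replace z with (Copp (Copp z)) by ring. rewrite H. ceq. Qed.

Definition frame_x (n : nat -> R) (a : nat -> C) (j : nat) : C :=
  Cplus (Cmult (al n) (a (2 * j)%nat)) (Cmult (beb n) (a (2 * j + 1)%nat)).
Definition frame_z (n : nat -> R) (a : nat -> C) (j : nat) : C :=
  Cminus (Cmult (be n) (a (2 * j)%nat)) (Cmult (alb n) (a (2 * j + 1)%nat)).

Lemma frame_even n a j : dot4 n n = 1 ->
  a (2 * j)%nat = Cplus (Cmult (alb n) (frame_x n a j)) (Cmult (beb n) (frame_z n a j)).
Proof.
  intros Hn. unfold frame_x, frame_z.
  transitivity (Cmult (Cplus (Cmult (al n) (alb n)) (Cmult (beb n) (be n))) (a (2 * j)%nat)).
  - rewrite symbol_norm_first by auto. ring.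
  - ring.
Qed.

Lemma frame_odd n a j : dot4 n n = 1 ->
  a (2 * j + 1)%nat = Cminus (Cmult (be n) (frame_x n a j)) (Cmult (al n) (frame_z n a j)).
Proof.
  intros Hn. unfold frame_x, frame_z.
  transitivity (Cmult (Cplus (Cmult (al n) (alb n)) (Cmult (beb n) (be n))) (a (2 * j + 1)%nat)).
  - rewrite symbol_norm_first by auto. ring.
  - ring.
Qed.

Section Regularity.
Variables (k : nat) (n xi : nat -> R) (c Bd : R) (u : nat -> R -> C).
Hypothesis Hk : (3 <= k)%nat.
Hypothesis Hn : dot4 n n = 1.
Hypothesis Hxn : dot4 xi n = 0.
Hypothesis Hc : 0 < c.
Hypothesis Hc2 : c ^ 2 = dot4 xi xi.
Hypothesis Hsm : forall r, smoothC (u r).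
Hypothesis Hbd : forall r t, 0 <= t -> Cmod (u r t) <= Bd.
Hypothesis Hbox : forall m t, (m < 2 * k)%nat -> 0 <= t -> box1 FM k (dtan n xi) u m t = RtoC 0.
Hypothesis Hbc0 : forall j, (j <= k)%nat -> D0star CM k (dnu n) (fun m => u m 0) j = RtoC 0.
Hypothesis Hbc1 : forall j, (j < 2 * k)%nat ->
  D1star CM k (dnu n) (fun j => D1 (R -> C) FM (dtan n xi) u j 0) j = RtoC 0.

Lemma box1_jet_eq0 m t p : (m < 2 * k)%nat -> 0 < t ->
  box1 JM k (djet n xi) (fun r => jet (u r) t) m p = RtoC 0.
Proof.
  intros Hm Ht. rewrite <- (jet_box1 n xi t k u m Hsm).
  rewrite (jet_ext_pos _ (fun _ => RtoC 0) t Ht); [apply jet_const_0|].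
  intros s Hs. apply Hbox; auto. lra.
Qed.

Lemma interior_decay m : (2 <= m)%nat -> (m <= 2 * k - 3)%nat ->
  forall t, 0 <= t -> u m t = exp_decay_affine (u m 0) (RtoC 0) c t.
Proof.
  intros Hm1 Hm2.
  destruct (bounded_forced_solution (u m) c Bd (RtoC 0) (RtoC 0) Hc (Hsm m) (Hbd m)) as [_ Hd].
  - intros t Ht.
    assert (Hlap : laplacian (djet n xi) (jet (u m) t) 0 = RtoC 0).
    { assert (E := box1_jet_eq0 m t 0 ltac:(lia) Ht).
      destruct (nat_parity m) as [q [[Em _]|[Em _]]]; subst m; destruct q as [|j]; try lia.
      - rewrite box1_JM_interior_even in E by lia. apply (Cmult_RtoC_eq0 (-2)); auto. lra.
      - rewrite box1_JM_interior_odd in E by lia. apply (Cmult_RtoC_eq0 (-2)); auto. lra. }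
    rewrite (laplacian_djet_unit n xi c) in Hlap by auto.
    rewrite jet_0 in Hlap.
    replace (jet (u m) t 2%nat) with
      (jet (u m) t 2%nat - RtoC (c ^ 2) * u m t + RtoC (c ^ 2) * u m t)%C by ring.
    rewrite Hlap. ceq.
  - intros t Ht. rewrite Hd by auto. f_equal. ceq.
Qed.

Lemma first_pair_solution : exists B : C,
  (forall t, 0 <= t -> u 0%nat t =
     exp_decay_affine (u 0%nat 0) (edge_slope c (q0_first xi) (alb n) B) c t) /\
  (forall t, 0 <= t -> u 1%nat t =
     exp_decay_affine (u 1%nat 0) (edge_slope c (q1_first xi) (be n) B) c t) /\
  B = ((g0_first xi - c * al n) * u 0%nat 0 + al n * edge_slope c (q0_first xi) (alb n) B
       + ((g1_first xi - c * beb n) * u 1%nat 0 + beb n * edge_slope c (q1_first xi) (be n) B))%C.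
Proof.
  apply edge_pair_solution with (Bd := Bd);
    auto using symbol_norm_first, edge_first_I1, edge_first_I2.
  - intros t p Ht. assert (E := box1_jet_eq0 (2 * 0) t p ltac:(lia) Ht).
    rewrite box1_JM_0 in E by auto. apply Copp_eq0 in E.
    rewrite (laplacian_djet_unit n xi c), dzb0_djet in E by auto.
    unfold edge_first in E. rewrite !dz0_djet, !dzb1_djet in E. exact E.
  - intros t p Ht. assert (E := box1_jet_eq0 (2 * 0 + 1) t p ltac:(lia) Ht).
    rewrite box1_JM_1 in E by auto. apply Copp_eq0 in E.
    rewrite (laplacian_djet_unit n xi c), dz1_djet in E by auto.
    unfold edge_first in E. rewrite !dz0_djet, !dzb1_djet in E. exact E.
Qed.

Lemma last_pair_solution : exists B : C,
  (forall t, 0 <= t -> u (2 * k - 2)%nat t =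
     exp_decay_affine (u (2 * k - 2)%nat 0) (edge_slope c (q0_last xi) (beb n) B) c t) /\
  (forall t, 0 <= t -> u (2 * k - 1)%nat t =
     exp_decay_affine (u (2 * k - 1)%nat 0) (edge_slope c (q1_last xi) (- al n) B) c t) /\
  B = ((g0_last xi - c * be n) * u (2 * k - 2)%nat 0 + be n * edge_slope c (q0_last xi) (beb n) B
       + ((g1_last xi - c * - alb n) * u (2 * k - 1)%nat 0
          + - alb n * edge_slope c (q1_last xi) (- al n) B))%C.
Proof.
  apply edge_pair_solution with (Bd := Bd);
    auto using symbol_norm_last, edge_last_I1, edge_last_I2.
  - intros t p Ht. assert (E := box1_jet_eq0 (2 * k - 2) t p ltac:(lia) Ht).
    rewrite box1_JM_last_even in E by auto. apply Copp_eq0 in E.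
    rewrite (laplacian_djet_unit n xi c), dzb1_djet in E by auto.
    unfold edge_last in E. rewrite !dz1_djet, !dzb0_djet in E.
    rewrite <- E. unfold edge_eq, edge_comb, g0_last, g1_last, q0_last. ring.
  - intros t p Ht. assert (E := box1_jet_eq0 (2 * k - 1) t p ltac:(lia) Ht).
    rewrite box1_JM_last_odd in E by auto. apply Copp_eq0 in E.
    rewrite (laplacian_djet_unit n xi c), dz0_djet in E by auto.
    unfold edge_last in E. rewrite !dz1_djet, !dzb0_djet in E.
    rewrite <- E. unfold edge_eq, edge_comb, g0_last, g1_last, q1_last. ring.
Qed.

Local Notation x := (frame_x n (fun r => u r 0)).
Local Notation z := (frame_z n (fun r => u r 0)).

Lemma D0star_boundary_jet j : (j <= k)%nat ->
  D0star JM k (djet_symbol n) (fun r _ => u r 0) j 0%nat = RtoC 0.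
Proof. intros Hj. rewrite <- D0star_dnu. apply Hbc0, Hj. Qed.

Lemma frame_z_first : z 0%nat = RtoC 0.
Proof.
  assert (E := D0star_boundary_jet 0 ltac:(lia)).
  rewrite D0star_JM_0, dz1_djet_symbol, dzb0_djet_symbol in E by lia. exact E.
Qed.

Lemma frame_z_next i : (1 <= i)%nat -> (i <= k - 1)%nat -> z i = (- x (i - 1)%nat)%C.
Proof.
  intros H1 H2. assert (E := D0star_boundary_jet i ltac:(lia)).
  replace i with (S (i - 1)) in E by lia.
  rewrite D0star_JM_S in E by lia. unfold ifc in E. ltb_cases.
  rewrite dz1_djet_symbol, dzb0_djet_symbol, dz0_djet_symbol, dzb1_djet_symbol in E.
  replace (2 * (i - 1) + 2)%nat with (2 * i)%nat in E by lia.
  replace (2 * (i - 1) + 3)%nat with (2 * i + 1)%nat in E by lia.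
  unfold frame_x, frame_z.
  match type of E with ?L = _ => transitivity (L - (al n * u (2 * (i - 1))%nat 0
                                                    + beb n * u (2 * (i - 1) + 1)%nat 0))%C end;
    [ring|].
  rewrite E. ring.
Qed.

Lemma frame_x_last : x (k - 1)%nat = RtoC 0.
Proof.
  assert (E := D0star_boundary_jet k ltac:(lia)).
  replace k with (S (k - 1)) in E at 2 by lia.
  rewrite D0star_JM_S in E by lia. unfold ifc in E. ltb_cases.
  rewrite dz0_djet_symbol, dzb1_djet_symbol in E.
  unfold frame_x. rewrite <- E. ring.
Qed.

Lemma D1star_boundary_jet i : (i < 2 * k)%nat ->
  D1star JM k (djet_symbol n)
    (fun r _ => D1 _ JM (djet n xi) (fun r => jet (u r) 0) r 0%nat) i 0%nat = 0.
Proof. intros Hi. rewrite <- D1star_dnu, <- (Hbc1 i Hi). reflexivity. Qed.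

Lemma D1_boundary_jet j : (j < k - 1)%nat ->
  D1 _ JM (djet n xi) (fun r => jet (u r) 0) j 0%nat = 0.
Proof.
  intros Hj.
  set (P := fun j => D1 _ JM (djet n xi) (fun r => jet (u r) 0) j 0%nat).
  change (P j = 0).
  transitivity ((al n * alb n + beb n * be n) * P j)%C;
    [rewrite symbol_norm_first by auto; ring|].
  destruct j as [|q].
  - assert (E0 := D1star_boundary_jet (2 * 0) ltac:(lia)).
    assert (E1 := D1star_boundary_jet (2 * 0 + 1) ltac:(lia)).
    rewrite D1star_JM_0, dzb0_djet_symbol in E0. rewrite D1star_JM_1, dz1_djet_symbol in E1.
    unfold ifc in E0, E1. ltb_cases.
    transitivity (al n * (alb n * P 0%nat) + beb n * (be n * P 0%nat))%C; [ring|].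
    unfold P. rewrite E0, E1. ring.
  - assert (E0 := D1star_boundary_jet (2 * S q) ltac:(lia)).
    assert (E1 := D1star_boundary_jet (2 * S q + 1) ltac:(lia)).
    rewrite D1star_JM_even, dzb0_djet_symbol, dzb1_djet_symbol in E0.
    rewrite D1star_JM_odd, dz1_djet_symbol, dz0_djet_symbol in E1.
    unfold ifc in E0, E1. ltb_cases.
    transitivity (al n * (alb n * P (S q) - beb n * P q)
                  + beb n * (be n * P (S q) + al n * P q))%C; [ring|].
    unfold P. rewrite E0, E1. ring.
Qed.

Lemma boundary_even j : u (2 * j)%nat 0 = (alb n * x j + beb n * z j)%C.
Proof. exact (frame_even n (fun r => u r 0) j Hn). Qed.

Lemma boundary_odd j : u (2 * j + 1)%nat 0 = (be n * x j - al n * z j)%C.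
Proof. exact (frame_odd n (fun r => u r 0) j Hn). Qed.

Lemma interior_jet_1 m : (2 <= m)%nat -> (m <= 2 * k - 3)%nat ->
  jet (u m) 0 1%nat = Cmult (RtoC (- c)) (jet (u m) 0 0%nat).
Proof.
  intros H1 H2.
  destruct (exp_decay_affine_jet_0 _ _ _ c (Hsm m) (interior_decay m H1 H2)) as [_ E].
  rewrite E, jet_0. ring.
Qed.

Lemma frame_x_row_first :
  Cplus (Cmult (RtoC ((sympl n xi + c) ^ 2 + 4 * c ^ 2)) (x 0%nat))
        (Cmult (RtoC (3 * c + sympl n xi)) (Cmult (cross n xi) (x 1%nat))) = RtoC 0.
Proof.
  destruct first_pair_solution as [B [W0 [W1 HB]]].
  destruct (exp_decay_affine_jet_0 _ _ _ c (Hsm 0%nat) W0) as [_ V0].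
  destruct (exp_decay_affine_jet_0 _ _ _ c (Hsm 1%nat) W1) as [_ V1].
  assert (Z1 : z 1%nat = Copp (x 0%nat)) by (apply frame_z_next; lia).
  apply (D1_row_first n xi c Hn Hxn Hc (fun r => jet (u r) 0) (x 0%nat) (x 1%nat) B);
    rewrite ?jet_0.
  - change 0%nat with (2 * 0)%nat at 1. rewrite boundary_even, frame_z_first. ring.
  - change 1%nat with (2 * 0 + 1)%nat at 1. rewrite boundary_odd, frame_z_first. ring.
  - change 2%nat with (2 * 1)%nat at 1. rewrite boundary_even, Z1. ring.
  - change 3%nat with (2 * 1 + 1)%nat at 1. rewrite boundary_odd, Z1. ring.
  - apply interior_jet_1; lia.
  - apply interior_jet_1; lia.
  - exact V0.
  - exact V1.
  - exact HB.
  - apply D1_boundary_jet. lia.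
Qed.

Lemma frame_x_row_interior j : (1 <= j)%nat -> (j <= k - 3)%nat ->
  Cplus (Cplus (Cmult (RtoC (2 * c)) (x j)) (Cmult (Cconj (cross n xi)) (x (j - 1)%nat)))
        (Cmult (cross n xi) (x (S j))) = RtoC 0.
Proof.
  intros H1 H2. rewrite <- (D1_boundary_jet j) by lia. symmetry.
  assert (Zj : z j = Copp (x (j - 1)%nat)) by (apply frame_z_next; lia).
  assert (ZS : z (S j) = Copp (x j)).
  { rewrite frame_z_next by lia. do 2 f_equal. lia. }
  apply (D1_row_interior n xi c Hn Hxn (fun r => jet (u r) 0) j); rewrite ?jet_0.
  - rewrite boundary_even, Zj. ring.
  - rewrite boundary_odd, Zj. ring.
  - replace (2 * j + 2)%nat with (2 * S j)%nat by lia. rewrite boundary_even, ZS. ring.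
  - replace (2 * j + 3)%nat with (2 * S j + 1)%nat by lia. rewrite boundary_odd, ZS. ring.
  - apply interior_jet_1; lia.
  - apply interior_jet_1; lia.
  - apply interior_jet_1; lia.
  - apply interior_jet_1; lia.
Qed.

Lemma frame_x_row_last :
  Cplus (Cmult (RtoC ((sympl n xi - c) ^ 2 + 4 * c ^ 2)) (x (k - 2)%nat))
        (Cmult (RtoC (3 * c - sympl n xi)) (Cmult (Cconj (cross n xi)) (x (k - 3)%nat))) = RtoC 0.
Proof.
  destruct last_pair_solution as [B [W2 [W3 HB]]].
  destruct (exp_decay_affine_jet_0 _ _ _ c (Hsm _) W2) as [_ V2].
  destruct (exp_decay_affine_jet_0 _ _ _ c (Hsm _) W3) as [_ V3].
  assert (Zm : z (k - 2)%nat = Copp (x (k - 3)%nat)).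
  { rewrite frame_z_next by lia. do 2 f_equal. lia. }
  assert (Zl : z (k - 1)%nat = Copp (x (k - 2)%nat)).
  { rewrite frame_z_next by lia. do 2 f_equal. lia. }
  assert (Hl : (2 * (k - 2) + 2 = 2 * (k - 1))%nat /\ (2 * (k - 2) + 3 = 2 * (k - 1) + 1)%nat
               /\ (2 * (k - 2) + 2 = 2 * k - 2)%nat /\ (2 * (k - 2) + 3 = 2 * k - 1)%nat) by lia.
  destruct Hl as [L0 [L1 [L2 L3]]].
  apply (D1_row_last n xi c Hn Hxn Hc (fun r => jet (u r) 0) (k - 2)
           (x (k - 3)%nat) (x (k - 2)%nat) B);
    rewrite ?jet_0.
  - rewrite boundary_even, Zm. ring.
  - rewrite boundary_odd, Zm. ring.
  - rewrite L0, boundary_even, frame_x_last, Zl. ring.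
  - rewrite L1, boundary_odd, frame_x_last, Zl. ring.
  - apply interior_jet_1; lia.
  - apply interior_jet_1; lia.
  - rewrite L2. exact V2.
  - rewrite L3. exact V3.
  - rewrite L2, L3. exact HB.
  - apply D1_boundary_jet. lia.
Qed.

Lemma boundary_values_zero r : (r < 2 * k)%nat -> u r 0 = RtoC 0.
Proof.
  intros Hr.
  assert (Hx : forall j, (j <= k - 1)%nat -> x j = RtoC 0).
  { intros j Hj. destruct (Nat.eq_dec j (k - 1)) as [->|]; [apply frame_x_last|].
    apply (coupled_recurrence_zero c (sympl n xi) (cross n xi) Hc
             (sympl_bounds n xi c Hn Hxn Hc2 Hc)
             (Cmod_cross_le n xi c Hn Hxn Hc2 Hc) k x Hk);
      auto using frame_x_row_first, frame_x_row_interior, frame_x_row_last; lia. }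
  assert (Hz : forall j, (j <= k - 1)%nat -> z j = RtoC 0).
  { intros [|j] Hj; [apply frame_z_first|]. rewrite frame_z_next, Hx by lia. ceq. }
  destruct (nat_parity r) as [q [[E _]|[E _]]]; subst r.
  - rewrite boundary_even, Hx, Hz by lia. ring.
  - rewrite boundary_odd, Hx, Hz by lia. ring.
Qed.

Lemma exp_decay_affine_0 q kk :
  exp_decay_affine (RtoC 0) (edge_slope c q kk (RtoC 0)) c = fun _ => RtoC 0.
Proof.
  apply functional_extensionality. intros s. unfold exp_decay_affine, edge_slope.
  destruct q, kk. ceq.
Qed.

Theorem regular_solution_zero m t : (m < 2 * k)%nat -> 0 <= t -> u m t = RtoC 0.
Proof.
  intros Hm Ht.
  destruct first_pair_solution as [B1 [W0 [W1 HB1]]].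
  destruct last_pair_solution as [B2 [W2 [W3 HB2]]].
  rewrite (boundary_values_zero 0) in W0, HB1 by lia.
  rewrite (boundary_values_zero 1) in W1, HB1 by lia.
  rewrite (boundary_values_zero (2 * k - 2)) in W2, HB2 by lia.
  rewrite (boundary_values_zero (2 * k - 1)) in W3, HB2 by lia.
  rewrite (edge_first_slope_zero n xi c Hn Hxn Hc2 Hc B1 HB1), exp_decay_affine_0 in W0, W1.
  rewrite (edge_last_slope_zero n xi c Hn Hxn Hc2 Hc B2 HB2), exp_decay_affine_0 in W2, W3.
  destruct (Nat.lt_ge_cases m 2) as [Hm2|Hm2];
    [|destruct (Nat.le_gt_cases m (2 * k - 3)) as [Hm3|Hm3]].
  - destruct m as [|[|m]]; [apply W0 | apply W1 | lia]; auto.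
  - rewrite interior_decay, boundary_values_zero by (auto; lia). unfold exp_decay_affine. ceq.
  - assert (m = 2 * k - 2 \/ m = 2 * k - 1)%nat as [->| ->] by lia; [apply W2 | apply W3]; auto.
Qed.
End Regularity.

Lemma D0star_ext {S} (M : CMod S) k d (u v : nat -> S) c :
  (forall r, (r < 2 * k)%nat -> u r = v r) -> D0star M k d u c = D0star M k d v c.
Proof.
  intros H. unfold D0star. f_equal.
  apply sumS_ext. intros l _. apply sumS_ext. intros r Hr. rewrite H; auto.
Qed.

Lemma D1star_ext {S} (M : CMod S) k d (u v : nat -> S) c :
  (forall r, (r < k - 1)%nat -> u r = v r) -> D1star M k d u c = D1star M k d v c.
Proof.
  intros H. unfold D1star. f_equal.
  apply sumS_ext. intros l _. apply sumS_ext. intros r Hr. rewrite H; auto.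
Qed.

Lemma D1_ext {S} (M : CMod S) k d (u v : nat -> S) j :
  (forall r, (r < 2 * k)%nat -> u r = v r) -> (j < k - 1)%nat -> D1 S M d u j = D1 S M d v j.
Proof. intros H Hj. unfold D1. rewrite !H by lia. reflexivity. Qed.

Lemma box1_ext {S} (M : CMod S) k d (u v : nat -> S) m :
  (forall r, (r < 2 * k)%nat -> u r = v r) -> box1 M k d u m = box1 M k d v m.
Proof.
  intros H. unfold box1. f_equal.
  - f_equal. apply functional_extensionality. intros c. apply D0star_ext; auto.
  - apply D1star_ext. intros r Hr. apply (D1_ext M k); auto.
Qed.

(* The operators only read the components [r < 2k]; extending [u] by zero lets the
   rest of the argument treat [u r] as smooth and bounded for every [r]. *)
Definition extend_zero (k : nat) (u : nat -> R -> C) (r : nat) : R -> C :=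
  if r <? 2 * k then u r else (fun _ => RtoC 0).

Lemma extend_zero_eq k u r : (r < 2 * k)%nat -> extend_zero k u r = u r.
Proof. intros H. unfold extend_zero. ltb_cases. reflexivity. Qed.

Lemma dot4_self_pos (v : nat -> R) : (exists l, (l < 4)%nat /\ v l <> 0) -> 0 < dot4 v v.
Proof.
  intros [l [Hl Hl0]]. unfold dot4.
  assert (0 < v l * v l) by (apply Rsqr_pos_lt; auto).
  assert (0 <= v 0%nat * v 0%nat) by nra. assert (0 <= v 1%nat * v 1%nat) by nra.
  assert (0 <= v 2%nat * v 2%nat) by nra. assert (0 <= v 3%nat * v 3%nat) by nra.
  destruct l as [|[|[|[|l]]]]; try lia; lra.
Qed.

Theorem mainTheorem7 :
  forall (k : nat), (3 <= k)%nat ->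
  forall (n xi : nat -> R),
    dot4 n n = 1 ->
    dot4 xi n = 0 ->
    (exists l, (l < 4)%nat /\ xi l <> 0) ->
    SL_condition k n xi.
Proof.
  intros k Hk n xi Hn Hxn Hxi%dot4_self_pos u Hsm [Bd HB] Hbox Hbc0 Hbc1 m t Hm Ht.
  assert (HBd : 0 <= Bd).
  { apply Rle_trans with (Cmod (u 0%nat 0)); [apply Cmod_ge_0 | apply HB; lia || lra]. }
  assert (Hext : forall r, (r < 2 * k)%nat -> extend_zero k u r = u r) by apply extend_zero_eq.
  rewrite <- (Hext m Hm).
  apply (regular_solution_zero k n xi (sqrt (dot4 xi xi)) Bd); auto.
  - apply sqrt_lt_R0, Hxi.
  - rewrite pow2_sqrt; lra.
  - intros r. unfold extend_zero. ltb_cases; auto. intros p s. split; apply ex_derive_n_const.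
  - intros r s Hs. unfold extend_zero. ltb_cases; auto. rewrite Cmod_0. exact HBd.
  - intros i s Hi Hs. rewrite (box1_ext FM k (dtan n xi) _ u); auto.
  - intros j Hj. rewrite <- (Hbc0 j Hj). apply D0star_ext. intros r Hr. now rewrite Hext.
  - intros j Hj. rewrite <- (Hbc1 j Hj). apply D1star_ext. intros r Hr.
    rewrite (D1_ext FM k _ _ u); auto.
Qed.
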